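(* Consider the system of ordinary differential equations \[ \begin{aligned} \frac{dS}{dt} &= \Lambda + \eta R + \theta V - (\beta I + \pi + \mu)S,\\ \frac{dV}{dt} &= \pi S - (\theta + \mu)V,\\ \frac{dE}{dt} &= \beta S I - (\gamma + \mu)E,\\ \frac{dI}{dt} &= \gamma E - (\delta + \tau + \mu)I,\\ \frac{dT}{dt} &= \delta I - (\alpha + \omega + \mu)T,\\ \frac{dR}{dt} &= \alpha T - (\eta + \mu)R, \end{aligned} \] where $\Lambda,\beta,\gamma,\mu,\pi,\eta,\theta,\delta,\tau,\alpha,\omega$ are positive constants. Let \[ \mathscr{E}_0=\left(\frac{\Lambda(\theta+\mu)}{\mu(\theta+\pi+\mu)},\ \frac{\Lambda\pi}{\mu(\theta+\pi+\mu)},\ 0,0,0,0\right) \] be the disease-free equilibrium (in the coordinates $(S,V,E,I,T,R)$) and \[ \mathscr{R}_v=\frac{\Lambda\beta\gamma(\theta+\mu)}{\mu(\delta+\tau+\mu)(\theta+\pi+\mu)(\gamma+\mu)}. \] Then $\mathscr{E}_0$ is locally asymptotically stable if $\mathscr{R}_v<1$ and unstable if $\mathscr{R}_v>1$.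
   Context: SVEITRS model of tuberculosis transmission: $S,V,E,I,T,R$ denote the susceptible, vaccinated, exposed, infectious, treated and recovered populations; all parameters positive. $\mathscr{R}_v$ is called the effective (control) reproduction number. *)

From Stdlib Require Import Reals Lra.
From Coquelicot Require Import Coquelicot.
Open Scope R_scope.

Record params := mkParams {
  Lam : R; beta : R; gamma : R; mu : R; pi_ : R; eta : R;
  theta : R; delta : R; tau : R; alpha : R; omega : R }.

Definition params_pos (p : params) : Prop :=
  0 < Lam p /\ 0 < beta p /\ 0 < gamma p /\ 0 < mu p /\ 0 < pi_ p /\
  0 < eta p /\ 0 < theta p /\ 0 < delta p /\ 0 < tau p /\ 0 < alpha p /\
  0 < omega p.

Record state := mkState { sS : R; sV : R; sE : R; sI : R; sT : R; sR : R }.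

Definition fS p (x : state) : R :=
  Lam p + eta p * sR x + theta p * sV x - (beta p * sI x + pi_ p + mu p) * sS x.
Definition fV p (x : state) : R := pi_ p * sS x - (theta p + mu p) * sV x.
Definition fE p (x : state) : R := beta p * sS x * sI x - (gamma p + mu p) * sE x.
Definition fI p (x : state) : R := gamma p * sE x - (delta p + tau p + mu p) * sI x.
Definition fT p (x : state) : R := delta p * sI x - (alpha p + omega p + mu p) * sT x.
Definition fR p (x : state) : R := alpha p * sT x - (eta p + mu p) * sR x.

Definition dist6 (x y : state) : R :=
  sqrt ((sS x - sS y)^2 + (sV x - sV y)^2 + (sE x - sE y)^2 +
        (sI x - sI y)^2 + (sT x - sT y)^2 + (sR x - sR y)^2).

Definition is_solution (p : params) (b : Rbar) (x : R -> state) : Prop :=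
  Rbar_lt (Finite 0) b /\
  (forall t, 0 < t -> Rbar_lt (Finite t) b ->
     is_derive (fun u => sS (x u)) t (fS p (x t)) /\
     is_derive (fun u => sV (x u)) t (fV p (x t)) /\
     is_derive (fun u => sE (x u)) t (fE p (x t)) /\
     is_derive (fun u => sI (x u)) t (fI p (x t)) /\
     is_derive (fun u => sT (x u)) t (fT p (x t)) /\
     is_derive (fun u => sR (x u)) t (fR p (x t))) /\
  filterlim (fun u => sS (x u)) (at_right 0) (locally (sS (x 0))) /\
  filterlim (fun u => sV (x u)) (at_right 0) (locally (sV (x 0))) /\
  filterlim (fun u => sE (x u)) (at_right 0) (locally (sE (x 0))) /\
  filterlim (fun u => sI (x u)) (at_right 0) (locally (sI (x 0))) /\
  filterlim (fun u => sT (x u)) (at_right 0) (locally (sT (x 0))) /\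
  filterlim (fun u => sR (x u)) (at_right 0) (locally (sR (x 0))).

Definition lyap_stable (p : params) (xe : state) : Prop :=
  forall eps, 0 < eps -> exists d, 0 < d /\
    forall (b : Rbar) (x : R -> state), is_solution p b x ->
      dist6 (x 0) xe < d ->
      forall t, 0 <= t -> Rbar_lt (Finite t) b -> dist6 (x t) xe < eps.

Definition loc_attractive (p : params) (xe : state) : Prop :=
  exists d, 0 < d /\
    forall x : R -> state, is_solution p p_infty x ->
      dist6 (x 0) xe < d ->
      is_lim (fun t => dist6 (x t) xe) p_infty 0.

Definition loc_asym_stable (p : params) (xe : state) : Prop :=
  lyap_stable p xe /\ loc_attractive p xe.

Definition unstable (p : params) (xe : state) : Prop := ~ lyap_stable p xe.

Definition E0 (p : params) : state :=
  mkState (Lam p * (theta p + mu p) / (mu p * (theta p + pi_ p + mu p)))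
          (Lam p * pi_ p / (mu p * (theta p + pi_ p + mu p))) 0 0 0 0.

Definition Rv (p : params) : R :=
  Lam p * beta p * gamma p * (theta p + mu p) /
  (mu p * (delta p + tau p + mu p) * (theta p + pi_ p + mu p) * (gamma p + mu p)).

(* For [Rv < 1], a weighted sum of squared deviations from [E0] is a strict
   Lyapunov function near [E0]. The (S, V) and (E, I) blocks of the
   linearisation are negative definite ([Rv < 1] says precisely that the (E, I)
   coupling is dominated by the diagonal); the remaining couplings are absorbed
   by fixing the weights of R, T and (E, I) in turn, and the nonlinear term
   [beta (S - S0) I] is small near [E0]. Exponential decay of this function
   gives stability and attractivity.

   For [Rv > 1], the (E, I) block has a positive eigenvalue, and a quadratic
   form W in (E, I) solving the Lyapunov equation satisfies W' >= c W near [E0]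
   (Chetaev). A solution starting arbitrarily close to [E0] with W > 0 then
   sees W grow exponentially, which a solution confined to a small ball cannot.
   Such solutions are built by Picard iteration for the system whose incidence
   term is clamped: it is globally Lipschitz and agrees with the model near
   [E0]. *)

From Stdlib Require Import Reals Lra Lia Psatz Classical.
From Coquelicot Require Import Coquelicot.
Open Scope R_scope.

(** * Real functions on [0, +oo) *)

Lemma ball_Rabs (x y : R) (e : posreal) : ball x e y <-> Rabs (y - x) < e.
Proof. reflexivity. Qed.

Lemma locally_Rabs (x : R) (P : R -> Prop) :
  locally x P <-> exists d, 0 < d /\ forall y, Rabs (y - x) < d -> P y.
Proof.
  split.
  - intros [d Hd]. exists d. split; [apply cond_pos|]. intros y Hy. now apply Hd.
  - intros [d [Hd H]]. exists (mkposreal d Hd). intros y Hy. now apply H.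
Qed.

Lemma continuity_pt_eps f x eps : continuity_pt f x -> 0 < eps ->
  exists d, 0 < d /\ forall y, Rabs (y - x) < d -> Rabs (f y - f x) < eps.
Proof.
  intros Hc He. apply locally_Rabs.
  exact (proj1 (continuity_pt_locally f x) Hc (mkposreal eps He)).
Qed.

Lemma continuity_pt_of_eps f x :
  (forall eps, 0 < eps ->
     exists d, 0 < d /\ forall y, Rabs (y - x) < d -> Rabs (f y - f x) < eps) ->
  continuity_pt f x.
Proof.
  intros H. apply continuity_pt_locally. intros eps. apply locally_Rabs.
  apply H, cond_pos.
Qed.

Lemma is_derive_continuity_pt (g : R -> R) t l : is_derive g t l -> continuity_pt g t.
Proof.
  intros H. apply continuity_pt_filterlim. apply (ex_derive_continuous g). now exists l.
Qed.

Lemma continuity_pt_cst (c t : R) : continuity_pt (fun _ => c) t.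
Proof. apply continuity_pt_const. now intros ? ?. Qed.

Lemma Rabs_Rmax0_le t s : Rabs (Rmax 0 t - Rmax 0 s) <= Rabs (t - s).
Proof.
  unfold Rmax; destruct (Rle_dec 0 t); destruct (Rle_dec 0 s);
  unfold Rabs; repeat destruct Rcase_abs; lra.
Qed.

Lemma continuity_pt_Rmax0 t : continuity_pt (Rmax 0) t.
Proof.
  apply continuity_pt_of_eps. intros eps He. exists eps. split; [exact He|].
  intros y Hy. eapply Rle_lt_trans; [apply Rabs_Rmax0_le|exact Hy].
Qed.

(* Right continuity at [0], phrased through the extension [u |-> g (max 0 u)]
   so that the continuity lemmas on closed intervals [[0, T]] apply. *)
Definition right_cont0 (g : R -> R) : Prop := continuity_pt (fun u => g (Rmax 0 u)) 0.

Lemma right_cont0P g : right_cont0 g <-> filterlim g (at_right 0) (locally (g 0)).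
Proof.
  unfold right_cont0. split.
  - intros H. apply filterlim_locally. intros eps. apply locally_Rabs.
    destruct (continuity_pt_eps _ _ eps H (cond_pos eps)) as [d [Hd Hd']].
    exists d. split; [exact Hd|]. intros y Hy Hy0. apply ball_Rabs.
    specialize (Hd' y Hy). now rewrite Rmax_right, (Rmax_left 0 0) in Hd' by lra.
  - intros H. apply continuity_pt_of_eps. intros eps He.
    apply (filterlim_locally _ _) with (eps := mkposreal eps He) in H.
    apply locally_Rabs in H. destruct H as [d [Hd H]].
    exists d. split; [exact Hd|]. intros y Hy.
    destruct (Rle_lt_dec y 0).
    + rewrite !Rmax_left, Rminus_eq_0, Rabs_R0 by lra. exact He.
    + rewrite Rmax_right, (Rmax_left 0 0) by lra. exact (H y Hy r).
Qed.

Lemma right_cont0_of_continuity_pt g : continuity_pt g 0 -> right_cont0 g.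
Proof.
  intros H. apply continuity_pt_comp; [apply continuity_pt_Rmax0|].
  now rewrite Rmax_left by lra.
Qed.

Lemma continuity_pt_Rmax0_comp g t :
  0 < t -> continuity_pt g t -> continuity_pt (fun u => g (Rmax 0 u)) t.
Proof.
  intros Ht Hc. apply continuity_pt_locally_ext with (f := g) (a := t); [exact Ht| |exact Hc].
  intros y Hy. apply Rabs_def2 in Hy. now rewrite Rmax_right by lra.
Qed.

Lemma is_derive_Rmax0_comp (g : R -> R) t l :
  0 < t -> is_derive g t l -> is_derive (fun u => g (Rmax 0 u)) t l.
Proof.
  intros Ht H. apply is_derive_ext_loc with (f := g); [|exact H].
  apply locally_Rabs. exists t. split; [exact Ht|]. intros y Hy.
  apply Rabs_def2 in Hy. now rewrite Rmax_right by lra.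
Qed.

Lemma continuity_on_closed g T : 0 < T -> right_cont0 g ->
  (forall t, 0 < t <= T -> continuity_pt g t) ->
  forall t, 0 <= t <= T -> continuity_pt (fun u => g (Rmax 0 u)) t.
Proof.
  intros HT H0 Hc t Ht. destruct (Req_dec t 0) as [->|Ht0]; [exact H0|].
  apply continuity_pt_Rmax0_comp; [lra|]. apply Hc. lra.
Qed.

Lemma nonincreasing_of_derive_nonpos (g g' : R -> R) T : 0 < T ->
  (forall t, 0 < t < T -> is_derive g t (g' t)) ->
  (forall t, 0 < t < T -> g' t <= 0) ->
  right_cont0 g -> continuity_pt g T -> g T <= g 0.
Proof.
  intros HT Hd Hn H0 HcT.
  destruct (MVT_gen (fun u => g (Rmax 0 u)) 0 T (fun t => Rmin (g' t) 0)) as [c [_ Hc]].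
  - rewrite Rmin_left, Rmax_right by lra. intros x Hx.
    apply is_derive_Rmax0_comp; [lra|]. rewrite Rmin_left by (apply Hn; lra). apply Hd. lra.
  - rewrite Rmin_left, Rmax_right by lra. apply (continuity_on_closed g T HT H0).
    intros t Ht. destruct (Req_dec t T) as [->|]; [exact HcT|].
    apply (is_derive_continuity_pt _ _ (g' t)), Hd. lra.
  - rewrite (Rmax_right 0 T), (Rmax_left 0 0) in Hc by lra.
    pose proof (Rmin_r (g' c) 0). nra.
Qed.

Lemma first_exit_time g K t1 : 0 <= t1 -> g 0 < K -> K <= g t1 -> right_cont0 g ->
  (forall t, 0 < t <= t1 -> continuity_pt g t) ->
  exists tau, 0 < tau <= t1 /\ K <= g tau /\ forall s, 0 <= s < tau -> g s < K.
Proof.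
  intros Ht1 H0 H1 Hr Hc.
  assert (Ht1' : 0 < t1) by (destruct (Req_dec t1 0) as [->|]; lra).
  set (h := fun u => g (Rmax 0 u)).
  assert (Hh : forall u, 0 <= u -> h u = g u) by (intros u Hu; unfold h; now rewrite Rmax_right).
  pose proof (continuity_on_closed g t1 Ht1' Hr Hc) as Hhc. fold h in Hhc.
  set (E := fun s => 0 <= s <= t1 /\ forall u, 0 <= u <= s -> g u < K).
  assert (HE : exists x, E x).
  { exists 0. split; [lra|]. intros u Hu. now replace u with 0 by lra. }
  destruct (completeness E) as [tau [Hub Hlub]]; [exists t1; intros s [Hs _]; lra|exact HE|].
  assert (Htau1 : tau <= t1) by (apply Hlub; intros s [Hs _]; lra).
  assert (Hbelow : forall s, 0 <= s < tau -> g s < K).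
  { intros s Hs. destruct (classic (exists e, E e /\ s <= e))
      as [[e [[_ He] Hse]]|Hn]; [apply He; lra|].
    enough (tau <= s) by lra. apply Hlub. intros e He.
    destruct (Rle_lt_dec e s); [assumption|]. exfalso. apply Hn. exists e. split; [exact He|lra]. }
  assert (Hextend : forall t, 0 <= t <= t1 -> (forall s, 0 <= s < t -> g s < K) -> g t < K ->
            t < t1 -> exists e, E e /\ t < e).
  { intros t Ht Hbt Hgt Htt1.
    destruct (continuity_pt_eps h t (K - g t) (Hhc t Ht)) as [d [Hd Hd']]; [lra|].
    exists (Rmin (t + d / 2) t1). split; [|apply Rmin_glb_lt; lra].
    split; [split; [apply Rmin_glb|apply Rmin_r]; lra|].
    intros u Hu. destruct (Rlt_le_dec u t); [apply Hbt; lra|].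
    pose proof (Rmin_l (t + d / 2) t1).
    specialize (Hd' u). rewrite !Hh in Hd' by lra.
    assert (Hut : Rabs (u - t) < d) by (rewrite Rabs_right; lra).
    apply Rabs_def2 in Hd'; [lra|exact Hut]. }
  assert (Htau0 : 0 < tau).
  { destruct (Hextend 0) as [e [He He0]]; [lra|intros; lra|exact H0|exact Ht1'|].
    apply Hub in He. lra. }
  exists tau. split; [lra|]. split; [|exact Hbelow].
  destruct (Rle_lt_dec K (g tau)) as [l|l]; [exact l|exfalso].
  destruct (Req_dec tau t1) as [->|]; [lra|].
  destruct (Hextend tau) as [e [He Hte]]; [lra|exact Hbelow|exact l|lra|].
  apply Hub in He. lra.
Qed.

Lemma exp_le_compat x y : x <= y -> exp x <= exp y.
Proof.
  intros H. destruct (Req_dec x y) as [->|Hne]; [lra|].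
  apply Rlt_le, exp_increasing. lra.
Qed.

Lemma continuity_pt_exp_scal r t : continuity_pt (fun s => exp (r * s)) t.
Proof.
  apply continuity_pt_comp with (f1 := fun s => r * s) (f2 := exp).
  - apply continuity_pt_mult; [apply continuity_pt_cst|apply continuity_pt_id].
  - apply derivable_continuous_pt, derivable_pt_exp.
Qed.

Lemma right_cont0_mult_exp g c : right_cont0 g -> right_cont0 (fun u => g u * exp (c * u)).
Proof.
  unfold right_cont0. intros H. apply continuity_pt_mult; [exact H|].
  apply continuity_pt_comp with (f1 := Rmax 0) (f2 := fun u => exp (c * u));
    [apply continuity_pt_Rmax0|apply continuity_pt_exp_scal].
Qed.

Lemma is_derive_mult_exp (g : R -> R) l c t :
  is_derive g t l -> is_derive (fun u => g u * exp (c * u)) t ((l + c * g t) * exp (c * t)).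
Proof.
  intros H. auto_derive; [eexists; eassumption|].
  change (fun x => g x) with g. rewrite (is_derive_unique _ _ _ H). ring.
Qed.

Lemma exp_weighted_nonincreasing (g g' : R -> R) c T : 0 < T ->
  (forall t, 0 < t < T -> is_derive g t (g' t)) ->
  (forall t, 0 < t < T -> g' t + c * g t <= 0) ->
  right_cont0 g -> continuity_pt g T -> g T * exp (c * T) <= g 0.
Proof.
  intros HT Hd Hn H0 HcT.
  replace (g 0) with (g 0 * exp (c * 0)) by (rewrite Rmult_0_r, exp_0; ring).
  apply (nonincreasing_of_derive_nonpos (fun u => g u * exp (c * u))
           (fun u => (g' u + c * g u) * exp (c * u)) T HT).
  - intros t Ht. now apply is_derive_mult_exp, Hd.
  - intros t Ht. pose proof (Hn t Ht). pose proof (exp_pos (c * t)). nra.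
  - now apply right_cont0_mult_exp.
  - apply continuity_pt_mult; [exact HcT|apply continuity_pt_exp_scal].
Qed.

(* [L e^(c t)] does not increase while [L < K], so [L] cannot reach [K] at a first exit time. *)
Lemma lyapunov_decay (L L' : R -> R) (b : Rbar) K c : 0 < K -> 0 <= c -> L 0 < K ->
  right_cont0 L ->
  (forall t, 0 < t -> Rbar_lt t b -> is_derive L t (L' t)) ->
  (forall t, 0 < t -> Rbar_lt t b -> L t < K -> L' t + c * L t <= 0) ->
  forall t, 0 <= t -> Rbar_lt t b -> L t < K /\ L t * exp (c * t) <= L 0.
Proof.
  intros HK Hc H0 Hr Hd Hdec.
  assert (Hlt : forall t T, t <= T -> Rbar_lt T b -> Rbar_lt t b)
    by (intros t T HtT; destruct b; simpl; auto; lra).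
  assert (Hmono : forall T, 0 < T -> Rbar_lt T b -> (forall s, 0 < s < T -> L s < K) ->
            L T * exp (c * T) <= L 0).
  { intros T HT HTb Hbelow. apply (exp_weighted_nonincreasing L L' c T HT).
    - intros s Hs. apply Hd; [lra|]. apply (Hlt s T); [lra|exact HTb].
    - intros s Hs. apply Hdec; [lra|apply (Hlt s T); [lra|exact HTb]|now apply Hbelow].
    - exact Hr.
    - apply (is_derive_continuity_pt _ _ (L' T)), Hd; assumption. }
  assert (Hall : forall t, 0 <= t -> Rbar_lt t b -> L t < K).
  { intros t1 Ht1 Ht1b. destruct (Rlt_le_dec (L t1) K) as [l|l]; [exact l|exfalso].
    destruct (first_exit_time L K t1 Ht1 H0 l Hr) as [tau [Htau [HKt Hbelow]]].
    { intros s Hs. apply (is_derive_continuity_pt _ _ (L' s)), Hd; [lra|].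
      apply (Hlt s t1); [lra|exact Ht1b]. }
    assert (L tau * exp (c * tau) <= L 0).
    { apply Hmono; [lra|apply (Hlt tau t1); [lra|exact Ht1b]|]. intros s Hs. apply Hbelow. lra. }
    assert (1 <= exp (c * tau)) by (pose proof (exp_ineq1_le (c * tau)); nra).
    nra. }
  intros t Ht Htb. split; [now apply Hall|].
  destruct (Req_dec t 0) as [->|Ht0]; [rewrite Rmult_0_r, exp_0; lra|].
  apply Hmono; [lra|exact Htb|]. intros s Hs. apply Hall; [lra|]. apply (Hlt s t); [lra|exact Htb].
Qed.

Lemma exp_growth (W W' : R -> R) c : right_cont0 W ->
  (forall t, 0 < t -> is_derive W t (W' t)) ->
  (forall t, 0 < t -> c * W t <= W' t) ->
  forall t, 0 <= t -> W 0 <= W t * exp (- c * t).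
Proof.
  intros Hr Hd Hg t Ht.
  destruct (Req_dec t 0) as [->|Ht0]; [rewrite Rmult_0_r, exp_0; lra|].
  enough (- W t * exp (- c * t) <= - W 0) by lra.
  assert (Hd' : forall s, 0 < s -> is_derive (fun u => - W u) s (- W' s)).
  { intros s Hs. specialize (Hd s Hs). auto_derive; [eexists; eassumption|].
    change (fun x => W x) with W. rewrite (is_derive_unique _ _ _ Hd). ring. }
  apply (exp_weighted_nonincreasing (fun u => - W u) (fun u => - W' u) (- c) t); [lra| | | |].
  - intros s Hs. apply Hd'. lra.
  - intros s Hs. pose proof (Hg s ltac:(lra)). lra.
  - apply continuity_pt_opp, Hr.
  - apply (is_derive_continuity_pt _ _ (- W' t)), Hd'. lra.
Qed.

Lemma nonpos_of_exp_growth_bounded (W W' : R -> R) c B : 0 < c -> right_cont0 W ->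
  (forall t, 0 < t -> is_derive W t (W' t)) ->
  (forall t, 0 < t -> c * W t <= W' t) ->
  (forall t, 0 <= t -> W t <= B) -> W 0 <= 0.
Proof.
  intros Hc Hr Hd Hg HB. destruct (Rle_lt_dec (W 0) 0) as [|HW0]; [assumption|exfalso].
  pose proof (HB 0 (Rle_refl 0)) as HB0.
  set (T := B / (W 0 * c)).
  assert (HT : 0 <= T) by (apply Rlt_le, Rdiv_lt_0_compat; [lra|nra]).
  pose proof (exp_growth W W' c Hr Hd Hg T HT) as Hgrow.
  assert (HcT : c * T = B / W 0) by (unfold T; field; lra).
  assert (Hexp : W 0 + B <= W 0 * exp (c * T)).
  { pose proof (exp_ineq1_le (c * T)) as He. rewrite HcT in He |- *.
    apply (Rmult_le_compat_l (W 0)) in He; [|lra].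
    replace (W 0 * (1 + B / W 0)) with (W 0 + B) in He by (field; lra). exact He. }
  assert (exp (- c * T) * exp (c * T) = 1)
    by (rewrite <- exp_plus; replace (- c * T + c * T) with 0 by ring; apply exp_0).
  pose proof (exp_pos (- c * T)). pose proof (exp_pos (c * T)). pose proof (HB T HT). nra.
Qed.

Lemma le_of_continuity_pt_left g tau K : 0 < tau -> continuity_pt g tau ->
  (forall s, 0 <= s < tau -> g s < K) -> g tau <= K.
Proof.
  intros Htau Hc Hb. destruct (Rle_lt_dec (g tau) K) as [|Hlt]; [assumption|exfalso].
  destruct (continuity_pt_eps g tau (g tau - K) Hc) as [d [Hd Hd']]; [lra|].
  set (s := Rmax 0 (tau - d / 2)).
  assert (Hs : 0 <= s < tau) by (split; [apply Rmax_l|apply Rmax_lub_lt; lra]).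
  assert (Hst : Rabs (s - tau) < d).
  { unfold s, Rmax. destruct (Rle_dec 0 (tau - d / 2)); rewrite Rabs_left by lra; lra. }
  specialize (Hd' s Hst). apply Rabs_def2 in Hd'. specialize (Hb s Hs). lra.
Qed.

Lemma Rabs_lt_of_sq_lt a r : 0 < r -> a^2 < r^2 -> Rabs a < r.
Proof.
  intros Hr H. rewrite <- pow2_abs in H. pose proof (Rabs_pos a).
  destruct (Rlt_le_dec (Rabs a) r); [assumption|nra].
Qed.

Lemma young_ineq c u w eps : 0 < eps -> c * u * w <= eps * u^2 + c^2 / (4 * eps) * w^2.
Proof.
  intros He.
  assert (eps * u^2 + c^2 / (4 * eps) * w^2 - c * u * w = eps * (u - c * w / (2 * eps))^2)
    by (field; lra).
  pose proof (pow2_ge_0 (u - c * w / (2 * eps))). nra.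
Qed.

Lemma binary_form_nonneg k a c bq e i : 0 < k -> 0 < a -> 0 < c -> bq^2 <= k^2 * a * c ->
  0 <= k * a * e^2 - 2 * bq * e * i + k * c * i^2.
Proof.
  intros Hk Ha Hc Hb.
  assert (Hid : k * a * (k * a * e^2 - 2 * bq * e * i + k * c * i^2)
                = (k * a * e - bq * i)^2 + (k^2 * a * c - bq^2) * i^2) by ring.
  pose proof (pow2_ge_0 (k * a * e - bq * i)). pose proof (pow2_ge_0 i).
  assert (0 < k * a) by nra. nra.
Qed.

Lemma cubic_term_le x e i r : Rabs x <= r -> x * e * i <= r * (e^2 + i^2) / 2.
Proof.
  intros Hx. apply Rle_trans with (Rabs (x * e * i)); [apply Rle_abs|].
  rewrite !Rabs_mult. rewrite <- (pow2_abs e), <- (pow2_abs i).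
  pose proof (Rabs_pos e). pose proof (Rabs_pos i). pose proof (Rabs_pos x).
  pose proof (pow2_ge_0 (Rabs e - Rabs i)). assert (0 <= Rabs e * Rabs i) by nra. nra.
Qed.

Lemma is_lim_of_sq_exp_bound (f : R -> R) A c : 0 < c ->
  (forall t, 0 <= t -> 0 <= f t /\ f t ^ 2 * exp (c * t) <= A) -> is_lim f p_infty 0.
Proof.
  intros Hc Hf. apply filterlim_locally. intros eps. pose proof (cond_pos eps) as He.
  assert (HA : 0 <= A).
  { destruct (Hf 0 (Rle_refl 0)) as [_ H]. pose proof (exp_pos (c * 0)).
    pose proof (pow2_ge_0 (f 0)). nra. }
  assert (Hec : 0 < eps^2 * c) by (apply Rmult_lt_0_compat; [apply pow_lt|]; lra).
  exists (A / (eps^2 * c)). intros t Ht.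
  assert (Ht0 : 0 <= t).
  { enough (0 <= A / (eps^2 * c)) by lra.
    apply Rmult_le_pos; [exact HA|apply Rlt_le, Rinv_0_lt_compat, Hec]. }
  destruct (Hf t Ht0) as [Hpos Hb]. apply ball_Rabs. rewrite Rminus_0_r.
  apply Rabs_lt_of_sq_lt; [exact He|].
  apply (Rmult_lt_compat_r (eps^2 * c)) in Ht; [|exact Hec].
  replace (A / (eps ^ 2 * c) * (eps ^ 2 * c)) with A in Ht by (field; lra).
  pose proof (exp_ineq1_le (c * t)). pose proof (pow2_ge_0 (f t)). pose proof (exp_pos (c * t)).
  assert (A < eps^2 * exp (c * t)) by nra.
  destruct (Rlt_le_dec (f t ^ 2) (eps ^ 2)) as [|Hge]; [assumption|].
  assert (eps^2 * exp (c * t) <= f t ^ 2 * exp (c * t)) by (apply Rmult_le_compat_r; lra).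
  lra.
Qed.

(** * Global solutions of Lipschitz systems by Picard iteration *)

Fixpoint l1norm (n : nat) (w : nat -> R) : R :=
  match n with O => 0 | S k => l1norm k w + Rabs (w k) end.

Lemma l1norm_ge0 n w : 0 <= l1norm n w.
Proof. induction n as [|n IH]; simpl; [lra|]. pose proof (Rabs_pos (w n)). lra. Qed.

Lemma Rabs_le_l1norm n w i : (i < n)%nat -> Rabs (w i) <= l1norm n w.
Proof.
  induction n as [|n IH]; intros Hi; simpl; [lia|].
  destruct (Nat.eq_dec i n) as [->|Hne]; [pose proof (l1norm_ge0 n w); lra|].
  pose proof (Rabs_pos (w n)). specialize (IH ltac:(lia)). lra.
Qed.

Lemma l1norm_le n w B : (forall i, (i < n)%nat -> Rabs (w i) <= B) -> l1norm n w <= INR n * B.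
Proof.
  induction n as [|n IH]; intros H; cbn [l1norm]; [simpl; lra|]. rewrite S_INR.
  specialize (IH (fun i Hi => H i ltac:(lia))). specialize (H n ltac:(lia)). lra.
Qed.

Lemma l1norm_le_scale n w v c : 0 <= c ->
  (forall i, (i < n)%nat -> Rabs (w i) <= c * Rabs (v i)) -> l1norm n w <= c * l1norm n v.
Proof.
  intros Hc. induction n as [|n IH]; intros H; simpl; [lra|].
  specialize (IH (fun i Hi => H i ltac:(lia))). specialize (H n ltac:(lia)). lra.
Qed.

Lemma continuity_pt_l1norm n (Y : nat -> R -> R) s :
  (forall j, (j < n)%nat -> continuity_pt (Y j) s) ->
  continuity_pt (fun u => l1norm n (fun j => Y j u - Y j s)) s.
Proof.
  induction n as [|n IH]; intros H; simpl; [apply continuity_pt_cst|].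
  apply continuity_pt_plus; [apply IH; intros j Hj; apply H; lia|].
  apply continuity_pt_comp with (f1 := fun u => Y n u - Y n s) (f2 := Rabs).
  - apply continuity_pt_minus; [apply H; lia|apply continuity_pt_cst].
  - apply Rcontinuity_abs.
Qed.

(* A vector field on R^n is given by its components [F i]; vectors are
   [nat -> R], of which only the first [n] coordinates matter. *)
Definition lipschitz_field (n : nat) (F : nat -> (nat -> R) -> R) (K : R) : Prop :=
  forall i y z, (i < n)%nat -> Rabs (F i y - F i z) <= K * l1norm n (fun j => y j - z j).

Lemma continuity_pt_lipschitz_comp n F K i (Y : nat -> R -> R) s :
  0 <= K -> lipschitz_field n F K -> (i < n)%nat ->
  (forall j, (j < n)%nat -> continuity_pt (Y j) s) ->
  continuity_pt (fun u => F i (fun j => Y j u)) s.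
Proof.
  intros HK HF Hi HY. apply continuity_pt_of_eps. intros eps He.
  set (h := fun u => K * l1norm n (fun j => Y j u - Y j s)).
  assert (Hh : continuity_pt h s).
  { apply continuity_pt_mult; [apply continuity_pt_cst|]. now apply continuity_pt_l1norm. }
  assert (Hhs : h s = 0).
  { unfold h. pose proof (l1norm_ge0 n (fun j => Y j s - Y j s)).
    enough (l1norm n (fun j => Y j s - Y j s) <= INR n * 0) by nra.
    apply l1norm_le. intros j _. rewrite Rminus_eq_0, Rabs_R0. lra. }
  destruct (continuity_pt_eps h s eps Hh He) as [d [Hd Hd']].
  exists d. split; [exact Hd|]. intros y Hy.
  specialize (Hd' y Hy). rewrite Hhs, Rminus_0_r in Hd'.
  eapply Rle_lt_trans; [apply HF; exact Hi|]. eapply Rle_lt_trans; [apply Rle_abs|exact Hd'].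
Qed.

Lemma ex_RInt_continuity g a b : (forall s, continuity_pt g s) -> ex_RInt g a b.
Proof.
  intros H. apply (ex_RInt_continuous (V := R_CompleteNormedModule)).
  intros z _. now apply continuity_pt_filterlim.
Qed.

Lemma is_derive_primitive c g t :
  (forall s, continuity_pt g s) -> is_derive (fun u => c + RInt g 0 u) t (g t).
Proof.
  intros H.
  assert (HI : is_derive (fun u => RInt g 0 u) t (g t)).
  { apply is_derive_RInt with (a := 0).
    - apply locally_Rabs. exists 1. split; [lra|]. intros y _.
      now apply RInt_correct, ex_RInt_continuity.
    - now apply continuity_pt_filterlim. }
  pose proof (is_derive_plus _ _ t _ _ (@is_derive_const R_AbsRing R_NormedModule c t) HI) as HP.
  replace (g t) with (plus (@zero R_AbelianMonoid) (g t)) by (unfold plus, zero; simpl; ring).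
  exact HP.
Qed.

Lemma Rabs_RInt_le_exp g C r t : 0 <= t -> 0 < r -> (forall s, continuity_pt g s) ->
  (forall s, 0 <= s <= t -> Rabs (g s) <= C * exp (r * s)) ->
  Rabs (RInt g 0 t) <= C * exp (r * t) / r.
Proof.
  intros Ht Hr Hg Hb.
  assert (HC : 0 <= C).
  { pose proof (Hb 0 ltac:(lra)). pose proof (Rabs_pos (g 0)). pose proof (exp_pos (r * 0)). nra. }
  assert (Hprim : RInt (fun s => C * exp (r * s)) 0 t = C * exp (r * t) / r - C * exp (r * 0) / r).
  { apply is_RInt_unique.
    apply (is_RInt_derive (fun s => C * exp (r * s) / r) (fun s => C * exp (r * s))).
    - intros s _. auto_derive; [exact I|field; lra].
    - intros s _. apply continuity_pt_filterlim, continuity_pt_mult;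
        [apply continuity_pt_cst|apply continuity_pt_exp_scal]. }
  eapply Rle_trans; [apply abs_RInt_le; [exact Ht|now apply ex_RInt_continuity]|].
  eapply Rle_trans; [apply RInt_le with (g := fun s => C * exp (r * s)); [exact Ht| | |]|].
  - apply ex_RInt_continuity. intros s.
    apply continuity_pt_comp with (f2 := Rabs); [apply Hg|apply Rcontinuity_abs].
  - apply ex_RInt_continuity. intros s.
    apply continuity_pt_mult; [apply continuity_pt_cst|apply continuity_pt_exp_scal].
  - intros s Hs. apply Hb. lra.
  - rewrite Hprim. pose proof (exp_pos (r * 0)).
    assert (0 <= C * exp (r * 0) / r) by (apply Rmult_le_pos; [nra|apply Rlt_le, Rinv_0_lt_compat, Hr]).
    lra.
Qed.

Lemma Rle_of_le_half_pow a b C : (forall k, a <= b + C * (/2)^k) -> a <= b.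
Proof.
  intros H. destruct (Rle_lt_dec a b) as [l|l]; [exact l|exfalso].
  destruct (Rle_lt_dec C 0) as [c|c]; [specialize (H 0%nat); simpl in H; lra|].
  destruct (pow_lt_1_zero (/2) ltac:(rewrite Rabs_right; lra) ((a - b) / C))
    as [N HN]; [apply Rdiv_lt_0_compat; lra|].
  specialize (HN N (le_n N)). rewrite Rabs_right in HN by (apply Rle_ge, pow_le; lra).
  specialize (H N). apply (Rmult_lt_compat_l C) in HN; [|exact c].
  replace (C * ((a - b) / C)) with (a - b) in HN by (field; lra). lra.
Qed.

Lemma is_lim_seq_Rabs_le (u : nat -> R) (l c B : R) k : is_lim_seq u l ->
  (forall m, (k <= m)%nat -> Rabs (u m - c) <= B) -> Rabs (l - c) <= B.
Proof.
  intros Hl Hb.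
  apply (is_lim_seq_le_loc (fun m => Rabs (u m - c)) (fun _ => B) (Rabs (l - c)) B).
  - exists k. exact Hb.
  - apply (is_lim_seq_abs _ (l - c)), is_lim_seq_minus'; [exact Hl|apply is_lim_seq_const].
  - apply is_lim_seq_const.
Qed.

Fixpoint picard_iter (F : nat -> (nat -> R) -> R) (x0 : nat -> R) (k : nat) : nat -> R -> R :=
  match k with
  | O => fun i _ => x0 i
  | S k => fun i t => x0 i + RInt (fun s => F i (fun j => picard_iter F x0 k j s)) 0 t
  end.

Section Picard.

Variables (n : nat) (F : nat -> (nat -> R) -> R) (K : R) (x0 : nat -> R).
Hypotheses (HK : 0 <= K) (HF : lipschitz_field n F K).

Let X := picard_iter F x0.

Lemma continuity_pt_picard_iter k i t : (i < n)%nat -> continuity_pt (X k i) t.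
Proof.
  revert i t. induction k as [|k IH]; intros i t Hi; simpl; [apply continuity_pt_cst|].
  apply (is_derive_continuity_pt _ _ (F i (fun j => X k j t))), is_derive_primitive.
  intros s. apply (continuity_pt_lipschitz_comp n F K); auto.
Qed.

Lemma continuity_pt_picard_integrand k i t :
  (i < n)%nat -> continuity_pt (fun u => F i (fun j => X k j u)) t.
Proof.
  intros Hi. apply (continuity_pt_lipschitz_comp n F K); auto.
  intros j Hj. now apply continuity_pt_picard_iter.
Qed.

(* With this rate, [n K / rate <= 1/2]: every iteration halves the gap. *)
Let rate := 2 * INR n * K + 1.
Let D := l1norm n (fun i => F i x0) / rate.

Let rate_pos : 0 < rate.
Proof. unfold rate. pose proof (pos_INR n). nra. Qed.

Let D_ge0 : 0 <= D.
Proof. unfold D. apply Rmult_le_pos; [apply l1norm_ge0|apply Rlt_le, Rinv_0_lt_compat, rate_pos]. Qed.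

Lemma picard_iter_step k t : 0 <= t ->
  l1norm n (fun j => X (S k) j t - X k j t) <= D * (/2)^k * exp (rate * t).
Proof.
  revert t. induction k as [|k IH]; intros t Ht.
  - simpl. rewrite Rmult_1_r.
    replace (D * exp (rate * t)) with (exp (rate * t) / rate * l1norm n (fun i => F i x0))
      by (unfold D; field; lra).
    apply l1norm_le_scale; [apply Rlt_le, Rdiv_lt_0_compat; [apply exp_pos|lra]|].
    intros i _. unfold X; simpl.
    rewrite Rplus_minus_l.
    replace (exp (rate * t) / rate * Rabs (F i x0)) with (Rabs (F i x0) * exp (rate * t) / rate)
      by (field; lra).
    apply Rabs_RInt_le_exp; [exact Ht|lra|intros; apply continuity_pt_cst|].
    intros s Hs. pose proof (exp_ineq1_le (rate * s)). pose proof (Rabs_pos (F i x0)).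
    assert (0 <= rate * s) by nra. change (fun j => x0 j) with x0. nra.
  - apply Rle_trans with (INR n * (K * (D * (/2)^k) * exp (rate * t) / rate)).
    + apply l1norm_le. intros i Hi.
      change (Rabs ((x0 i + RInt (fun s => F i (fun j => X (S k) j s)) 0 t)
                    - (x0 i + RInt (fun s => F i (fun j => X k j s)) 0 t))
              <= K * (D * (/ 2) ^ k) * exp (rate * t) / rate).
      replace (_ - _) with (RInt (fun s => F i (fun j => X (S k) j s) - F i (fun j => X k j s)) 0 t).
      2: { rewrite (RInt_minus (V := R_CompleteNormedModule));
           [unfold minus, plus, opp; simpl; ring| |];
           apply ex_RInt_continuity; intros s; now apply continuity_pt_picard_integrand. }
      apply Rabs_RInt_le_exp; [exact Ht|lra| |].
      * intros s. apply continuity_pt_minus; now apply continuity_pt_picard_integrand.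
      * intros s Hs. eapply Rle_trans; [apply HF, Hi|].
        rewrite Rmult_assoc. apply Rmult_le_compat_l; [exact HK|]. apply IH. lra.
    + pose proof (pos_INR n). pose proof (exp_pos (rate * t)). pose proof (pow_le (/2) k).
      assert (0 <= D * (/2)^k * exp (rate * t)) by (apply Rmult_le_pos; [apply Rmult_le_pos|]; lra).
      replace (INR n * (K * (D * (/ 2) ^ k) * exp (rate * t) / rate))
        with ((INR n * K / rate) * (D * (/2)^k * exp (rate * t))) by (field; lra).
      replace (D * (/ 2) ^ S k * exp (rate * t)) with (/2 * (D * (/2)^k * exp (rate * t)))
        by (simpl; ring).
      apply Rmult_le_compat_r; [lra|].
      apply (Rmult_le_reg_r rate); [lra|].
      replace (INR n * K / rate * rate) with (INR n * K) by (field; lra). unfold rate; nra.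
Qed.

Lemma picard_iter_cauchy k m i t : 0 <= t -> (k <= m)%nat -> (i < n)%nat ->
  Rabs (X m i t - X k i t) <= 2 * D * (/2)^k * exp (rate * t).
Proof.
  intros Ht Hkm Hi.
  enough (H : forall m, (k <= m)%nat ->
            Rabs (X m i t - X k i t) <= 2 * D * exp (rate * t) * ((/2)^k - (/2)^m)).
  { eapply Rle_trans; [apply H, Hkm|]. pose proof (pow_le (/2) m). pose proof (exp_pos (rate * t)).
    assert (0 <= 2 * D * exp (rate * t)) by (apply Rmult_le_pos; lra).
    replace (2 * D * (/2)^k * exp (rate * t)) with (2 * D * exp (rate * t) * (/2)^k) by ring.
    apply Rmult_le_compat_l; lra. }
  intros m' Hm'. induction Hm' as [|m' Hm' IH].
  - rewrite !Rminus_eq_0, Rabs_R0. lra.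
  - replace (X (S m') i t - X k i t) with ((X (S m') i t - X m' i t) + (X m' i t - X k i t)) by ring.
    eapply Rle_trans; [apply Rabs_triang|].
    pose proof (Rle_trans _ _ _ (Rabs_le_l1norm n _ i Hi) (picard_iter_step m' t Ht)).
    replace ((/2)^(S m')) with ((/2)^m' * /2) by (simpl; ring). lra.
Qed.

Definition picard_solution (i : nat) (t : R) : R :=
  real (Lim_seq (fun k => picard_iter F x0 k i (Rmax 0 t))).

Let P := picard_solution.

Lemma picard_solution_lim i t : (i < n)%nat ->
  is_lim_seq (fun k => X k i (Rmax 0 t)) (P i t).
Proof.
  intros Hi. set (t' := Rmax 0 t). assert (Ht' : 0 <= t') by apply Rmax_l.
  assert (Hc : ex_finite_lim_seq (fun k => X k i t')).
  { apply ex_lim_seq_cauchy_corr. intros eps.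
    set (B := 4 * D * exp (rate * t') + 1).
    assert (HB : 0 < B) by (unfold B; pose proof (exp_pos (rate * t')); nra).
    destruct (pow_lt_1_zero (/2) ltac:(rewrite Rabs_right; lra) (eps / B))
      as [N HN]; [apply Rdiv_lt_0_compat; [apply cond_pos|lra]|].
    exists N. intros k m Hk Hm.
    pose proof (picard_iter_cauchy N k i t' Ht' Hk Hi).
    pose proof (picard_iter_cauchy N m i t' Ht' Hm Hi).
    specialize (HN N (le_n N)). rewrite Rabs_right in HN by (apply Rle_ge, pow_le; lra).
    apply (Rmult_lt_compat_l B) in HN; [|exact HB].
    replace (B * (eps / B)) with (pos eps) in HN by (field; lra).
    unfold B in HN. pose proof (pow_le (/2) N). pose proof (exp_pos (rate * t')).
    replace (X k i t' - X m i t') with ((X k i t' - X N i t') - (X m i t' - X N i t')) by ring.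
    eapply Rle_lt_trans; [apply Rabs_triang|]. rewrite Rabs_Ropp. nra. }
  destruct Hc as [l Hl]. unfold P, picard_solution.
  change (is_lim_seq (fun k => X k i t') (real (Lim_seq (fun k => X k i t')))).
  now rewrite (is_lim_seq_unique _ _ Hl).
Qed.

Lemma picard_solution_close k i t : (i < n)%nat ->
  Rabs (P i t - X k i (Rmax 0 t)) <= 2 * D * (/2)^k * exp (rate * Rmax 0 t).
Proof.
  intros Hi. apply (is_lim_seq_Rabs_le _ _ _ _ k (picard_solution_lim i t Hi)).
  intros m Hm. apply picard_iter_cauchy; [apply Rmax_l|exact Hm|exact Hi].
Qed.

(* The iterates converge uniformly on bounded sets. *)
Lemma continuity_pt_picard_solution i t : (i < n)%nat -> continuity_pt (P i) t.
Proof.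
  intros Hi. set (r := mkposreal 1 Rlt_0_1).
  apply (CVU_continuity (fun k y => X k i (Rmax 0 y)) (P i) t r);
    [|intros k y _|unfold Boule; rewrite Rminus_eq_0, Rabs_R0; simpl; lra].
  - intros eps He. set (B := 2 * D * exp (rate * (Rabs t + 1)) + 1).
    assert (HB : 0 < B) by (unfold B; pose proof (exp_pos (rate * (Rabs t + 1))); nra).
    destruct (pow_lt_1_zero (/2) ltac:(rewrite Rabs_right; lra) (eps / B))
      as [N HN]; [apply Rdiv_lt_0_compat; lra|].
    exists N. intros k y Hk Hy. unfold Boule in Hy; simpl in Hy.
    eapply Rle_lt_trans; [apply picard_solution_close, Hi|].
    specialize (HN k Hk). rewrite Rabs_right in HN by (apply Rle_ge, pow_le; lra).
    assert (Hexp : exp (rate * Rmax 0 y) <= exp (rate * (Rabs t + 1))).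
    { apply exp_le_compat. apply Rmult_le_compat_l; [lra|]. apply Rmax_lub.
      - pose proof (Rabs_pos t); lra.
      - apply Rabs_def2 in Hy. pose proof (Rle_abs t). lra. }
    apply (Rmult_lt_compat_l B) in HN; [|exact HB].
    replace (B * (eps / B)) with eps in HN by (field; lra).
    pose proof (pow_le (/2) k). pose proof (exp_pos (rate * Rmax 0 y)).
    unfold B in HN. nra.
  - apply continuity_pt_comp; [apply continuity_pt_Rmax0|]. now apply continuity_pt_picard_iter.
Qed.

Lemma picard_solution_close_nonneg k i t : (i < n)%nat -> 0 <= t ->
  Rabs (P i t - X k i t) <= 2 * D * (/2)^k * exp (rate * t).
Proof.
  intros Hi Ht. rewrite <- (Rmax_right 0 t) at 2 3 by exact Ht.
  now apply picard_solution_close.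
Qed.

Lemma continuity_pt_solution_integrand i s :
  (i < n)%nat -> continuity_pt (fun u => F i (fun j => P j u)) s.
Proof.
  intros Hi. apply (continuity_pt_lipschitz_comp n F K); auto.
  intros j Hj. now apply continuity_pt_picard_solution.
Qed.

Lemma Rabs_RInt_picard_integrand_gap k i t : (i < n)%nat -> 0 <= t ->
  Rabs (RInt (fun s => F i (fun j => X k j s)) 0 t - RInt (fun s => F i (fun j => P j s)) 0 t)
  <= D * (/2)^k * exp (rate * t).
Proof.
  intros Hi Ht.
  rewrite <- (RInt_minus (V := R_CompleteNormedModule)) by
    (apply ex_RInt_continuity; intros s;
     first [now apply continuity_pt_picard_integrand|now apply continuity_pt_solution_integrand]).
  replace (D * (/2)^k * exp (rate * t)) with (rate * (D * (/2)^k) * exp (rate * t) / rate)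
    by (field; lra).
  apply Rabs_RInt_le_exp; [exact Ht|exact rate_pos| |].
  - intros s. apply continuity_pt_minus;
      [now apply continuity_pt_picard_integrand|now apply continuity_pt_solution_integrand].
  - intros s Hs. eapply Rle_trans; [apply HF, Hi|].
    apply Rle_trans with (K * (INR n * (2 * D * (/2)^k * exp (rate * s)))).
    + apply Rmult_le_compat_l; [exact HK|]. apply l1norm_le. intros j Hj.
      rewrite Rabs_minus_sym. apply picard_solution_close_nonneg; [exact Hj|lra].
    + pose proof (pos_INR n). pose proof (exp_pos (rate * s)). pose proof (pow_le (/2) k).
      assert (0 <= D * (/2)^k * exp (rate * s)) by (apply Rmult_le_pos; [apply Rmult_le_pos|]; lra).
      replace (K * (INR n * (2 * D * (/ 2) ^ k * exp (rate * s))))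
        with ((rate - 1) * (D * (/2)^k * exp (rate * s))) by (unfold rate; ring).
      replace (rate * (D * (/ 2) ^ k) * exp (rate * s))
        with (rate * (D * (/2)^k * exp (rate * s))) by ring.
      nra.
Qed.

Lemma picard_solution_integral i t : (i < n)%nat -> 0 <= t ->
  P i t = x0 i + RInt (fun s => F i (fun j => P j s)) 0 t.
Proof.
  intros Hi Ht. set (G := fun s => F i (fun j => P j s)).
  enough (H : Rabs (P i t - (x0 i + RInt G 0 t)) <= 0).
  { pose proof (Rabs_pos (P i t - (x0 i + RInt G 0 t))).
    assert (Hz : Rabs (P i t - (x0 i + RInt G 0 t)) = 0) by lra.
    apply Rabs_eq_0 in Hz. lra. }
  apply (Rle_of_le_half_pow _ _ (2 * D * exp (rate * t))). intros k.
  pose proof (picard_solution_close_nonneg (S k) i t Hi Ht) as B1.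
  pose proof (Rabs_RInt_picard_integrand_gap k i t Hi Ht) as B2. fold G in B2.
  unfold X in B1, B2. simpl in B1.
  replace (P i t - (x0 i + RInt G 0 t)) with
    ((P i t - (x0 i + RInt (fun s => F i (fun j => picard_iter F x0 k j s)) 0 t))
     + (RInt (fun s => F i (fun j => picard_iter F x0 k j s)) 0 t - RInt G 0 t)) by ring.
  eapply Rle_trans; [apply Rabs_triang|].
  replace (/2 * (/2)^k) with ((/2)^k * /2) in B1 by ring. lra.
Qed.

Lemma is_derive_picard_solution i t : (i < n)%nat -> 0 < t ->
  is_derive (P i) t (F i (fun j => P j t)).
Proof.
  intros Hi Ht.
  apply is_derive_ext_loc with (f := fun u => x0 i + RInt (fun s => F i (fun j => P j s)) 0 u).
  - apply locally_Rabs. exists t. split; [exact Ht|]. intros y Hy. apply Rabs_def2 in Hy.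
    symmetry. apply picard_solution_integral; [exact Hi|lra].
  - apply is_derive_primitive. intros s. now apply continuity_pt_solution_integrand.
Qed.

End Picard.

Theorem lipschitz_field_global_solution n F K x0 : 0 <= K -> lipschitz_field n F K ->
  exists Y : nat -> R -> R,
    (forall i, (i < n)%nat -> Y i 0 = x0 i) /\
    (forall i t, (i < n)%nat -> continuity_pt (Y i) t) /\
    (forall i t, (i < n)%nat -> 0 < t -> is_derive (Y i) t (F i (fun j => Y j t))).
Proof.
  intros HK HF. exists (picard_solution F x0). split; [|split].
  - intros i Hi. rewrite (picard_solution_integral n F K x0 HK HF i 0 Hi (Rle_refl 0)), RInt_point.
    unfold zero; simpl. ring.
  - intros i t Hi. now apply (continuity_pt_picard_solution n F K).
  - intros i t Hi Ht. now apply (is_derive_picard_solution n F K).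
Qed.

(** * The model near the disease-free equilibrium *)

Ltac params_pos_facts Hp :=
  let H := fresh in pose proof Hp as H;
  destruct H as (?&?&?&?&?&?&?&?&?&?&?).

Definition kE p := gamma p + mu p.
Definition kI p := delta p + tau p + mu p.
Definition kT p := alpha p + omega p + mu p.
Definition kR p := eta p + mu p.
Definition S0 p := sS (E0 p).
Definition V0 p := sV (E0 p).

Lemma S0_pos p : params_pos p -> 0 < S0 p.
Proof. intros Hp. params_pos_facts Hp. unfold S0, E0; simpl. apply Rdiv_lt_0_compat; nra. Qed.

Lemma Rv_eq p : params_pos p -> Rv p = gamma p * beta p * S0 p / (kE p * kI p).
Proof. intros Hp. params_pos_facts Hp. unfold Rv, S0, kE, kI, E0; simpl. field. lra. Qed.

Lemma fS_E0_dev p z : params_pos p ->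
  fS p z = eta p * sR z + theta p * (sV z - V0 p) - (pi_ p + mu p) * (sS z - S0 p)
           - beta p * S0 p * sI z - beta p * (sS z - S0 p) * sI z.
Proof.
  intros Hp. params_pos_facts Hp. unfold fS, S0, V0, E0; simpl. field. nra.
Qed.

Lemma fV_E0_dev p z : params_pos p ->
  fV p z = pi_ p * (sS z - S0 p) - (theta p + mu p) * (sV z - V0 p).
Proof.
  intros Hp. params_pos_facts Hp. unfold fV, S0, V0, E0; simpl. field. nra.
Qed.

Lemma fE_E0_dev p z : fE p z = beta p * S0 p * sI z + beta p * (sS z - S0 p) * sI z - kE p * sE z.
Proof. unfold fE, kE. ring. Qed.

Definition wsqdist (w z c : state) : R :=
  sS w * (sS z - sS c)^2 + sV w * (sV z - sV c)^2 + sE w * (sE z - sE c)^2 +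
  sI w * (sI z - sI c)^2 + sT w * (sT z - sT c)^2 + sR w * (sR z - sR c)^2.

Definition sqdist (z c : state) : R := wsqdist (mkState 1 1 1 1 1 1) z c.

Lemma sqdist_ge0 z c : 0 <= sqdist z c.
Proof.
  unfold sqdist, wsqdist; cbn [sS sV sE sI sT sR].
  repeat apply Rplus_le_le_0_compat; rewrite Rmult_1_l; apply pow2_ge_0.
Qed.

Lemma dist6_lt z c e : 0 < e -> (dist6 z c < e <-> sqdist z c < e^2).
Proof.
  intros He. replace (dist6 z c) with (sqrt (sqdist z c))
    by (unfold dist6, sqdist, wsqdist; cbn [sS sV sE sI sT sR]; f_equal; ring).
  pose proof (sqdist_ge0 z c). split; intros Hlt.
  - pose proof (sqrt_pos (sqdist z c)). rewrite <- (pow2_sqrt (sqdist z c)) by lra. nra.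
  - rewrite <- (sqrt_pow2 e) by lra. apply sqrt_lt_1_alt. lra.
Qed.

Lemma sq_le_sqdist z c :
  (sS z - sS c)^2 <= sqdist z c /\ (sE z - sE c)^2 + (sI z - sI c)^2 <= sqdist z c.
Proof.
  unfold sqdist, wsqdist; cbn [sS sV sE sI sT sR].
  pose proof (pow2_ge_0 (sS z - sS c)). pose proof (pow2_ge_0 (sV z - sV c)).
  pose proof (pow2_ge_0 (sE z - sE c)). pose proof (pow2_ge_0 (sI z - sI c)).
  pose proof (pow2_ge_0 (sT z - sT c)). pose proof (pow2_ge_0 (sR z - sR c)).
  split; lra.
Qed.

Lemma wsqdist_bounds w z c m M :
  m <= sS w <= M -> m <= sV w <= M -> m <= sE w <= M ->
  m <= sI w <= M -> m <= sT w <= M -> m <= sR w <= M ->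
  m * sqdist z c <= wsqdist w z c <= M * sqdist z c.
Proof.
  intros. unfold sqdist, wsqdist; simpl.
  pose proof (pow2_ge_0 (sS z - sS c)). pose proof (pow2_ge_0 (sV z - sV c)).
  pose proof (pow2_ge_0 (sE z - sE c)). pose proof (pow2_ge_0 (sI z - sI c)).
  pose proof (pow2_ge_0 (sT z - sT c)). pose proof (pow2_ge_0 (sR z - sR c)).
  split; nra.
Qed.

Definition wsqdist_rate p (w z c : state) : R :=
  2 * (sS w * (sS z - sS c) * fS p z + sV w * (sV z - sV c) * fV p z +
       sE w * (sE z - sE c) * fE p z + sI w * (sI z - sI c) * fI p z +
       sT w * (sT z - sT c) * fT p z + sR w * (sR z - sR c) * fR p z).

Lemma is_derive_weighted_squares (g0 g1 g2 g3 g4 g5 : R -> R)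
    (d0 d1 d2 d3 d4 d5 w0 w1 w2 w3 w4 w5 c0 c1 c2 c3 c4 c5 t : R) :
  is_derive g0 t d0 -> is_derive g1 t d1 -> is_derive g2 t d2 ->
  is_derive g3 t d3 -> is_derive g4 t d4 -> is_derive g5 t d5 ->
  is_derive (fun u => w0 * (g0 u - c0)^2 + w1 * (g1 u - c1)^2 + w2 * (g2 u - c2)^2 +
                      w3 * (g3 u - c3)^2 + w4 * (g4 u - c4)^2 + w5 * (g5 u - c5)^2) t
    (2 * (w0 * (g0 t - c0) * d0 + w1 * (g1 t - c1) * d1 + w2 * (g2 t - c2) * d2 +
          w3 * (g3 t - c3) * d3 + w4 * (g4 t - c4) * d4 + w5 * (g5 t - c5) * d5)).
Proof.
  intros D0 D1 D2 D3 D4 D5. auto_derive.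
  - repeat split; eexists; eassumption.
  - change (fun x => g0 x) with g0. change (fun x => g1 x) with g1. change (fun x => g2 x) with g2.
    change (fun x => g3 x) with g3. change (fun x => g4 x) with g4. change (fun x => g5 x) with g5.
    rewrite (is_derive_unique _ _ _ D0), (is_derive_unique _ _ _ D1), (is_derive_unique _ _ _ D2),
      (is_derive_unique _ _ _ D3), (is_derive_unique _ _ _ D4), (is_derive_unique _ _ _ D5).
    ring.
Qed.

Lemma is_derive_wsqdist p b x w c t : is_solution p b x -> 0 < t -> Rbar_lt t b ->
  is_derive (fun u => wsqdist w (x u) c) t (wsqdist_rate p w (x t) c).
Proof.
  intros [_ [Hd _]] Ht Htb. destruct (Hd t Ht Htb) as (D0&D1&D2&D3&D4&D5).
  exact (is_derive_weighted_squares _ _ _ _ _ _ _ _ _ _ _ _ _ _ _ _ _ _ _ _ _ _ _ _ _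
           D0 D1 D2 D3 D4 D5).
Qed.

Definition continuous_state_at (x : R -> state) (t : R) : Prop :=
  continuity_pt (fun u => sS (x u)) t /\ continuity_pt (fun u => sV (x u)) t /\
  continuity_pt (fun u => sE (x u)) t /\ continuity_pt (fun u => sI (x u)) t /\
  continuity_pt (fun u => sT (x u)) t /\ continuity_pt (fun u => sR (x u)) t.

Lemma continuity_pt_sq_dev f c t : continuity_pt f t -> continuity_pt (fun u => (f u - c)^2) t.
Proof.
  intros H. apply continuity_pt_ext with (f := fun u => (f u - c) * (f u - c)); [intros; ring|].
  apply continuity_pt_mult; apply continuity_pt_minus; auto; apply continuity_pt_cst.
Qed.

Lemma continuity_pt_wsqdist (x : R -> state) w c t :
  continuous_state_at x t -> continuity_pt (fun u => wsqdist w (x u) c) t.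
Proof.
  intros (H0&H1&H2&H3&H4&H5). unfold wsqdist.
  repeat apply continuity_pt_plus;
    (apply continuity_pt_mult; [apply continuity_pt_cst|now apply continuity_pt_sq_dev]).
Qed.

Lemma right_cont0_wsqdist p b x w c : is_solution p b x -> right_cont0 (fun u => wsqdist w (x u) c).
Proof.
  intros (_&_&H0&H1&H2&H3&H4&H5). apply right_cont0P in H0, H1, H2, H3, H4, H5.
  now apply (continuity_pt_wsqdist (fun u => x (Rmax 0 u))).
Qed.

(** * Stability when [Rv p < 1] *)

Section Stability.

Variable p : params.
Hypotheses (Hp : params_pos p) (HRv : Rv p < 1).

Definition qx := pi_ p * mu p * (pi_ p + mu p) / (theta p + mu p).
Definition qv := theta p * mu p * (theta p + mu p) / (pi_ p + mu p).
Definition qe := (1 - Rv p) / 2 * (gamma p * kE p).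
Definition qi := (1 - Rv p) / 2 * (beta p * S0 p * kI p).
Definition Y1 := (pi_ p * eta p)^2 / qx.
Definition Y2 := (pi_ p * beta p * S0 p)^2 / qx.

(* Weights of the Lyapunov function, chosen in the order R, T, (E, I) so that each
   cross term can be absorbed by the diagonal terms fixed before it. *)
Definition wR := 2 * (Y1 + 1) / kR p.
Definition wT := (2 * (wR * alpha p ^ 2 / kR p) + 1) / kT p.
Definition wA := 8 * (Y2 + wT * delta p ^ 2 / kT p / 2 + 1) / qi.

Definition lyap_weights : state :=
  mkState (pi_ p) (theta p) (wA * gamma p) (wA * beta p * S0 p) wT wR.
Definition lyap (z : state) : R := wsqdist lyap_weights z (E0 p).

Definition wmin := Rmin (pi_ p) (Rmin (theta p) (Rmin (wA * gamma p)
                     (Rmin (wA * beta p * S0 p) (Rmin wT wR)))).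
Definition wmax := pi_ p + theta p + wA * gamma p + wA * beta p * S0 p + wT + wR.

(* Radius on which the nonlinear terms [beta x i] are dominated. *)
Definition r0 := Rmin (qx / (4 * (pi_ p * beta p)))
                   (Rmin (qe / (gamma p * beta p)) (qi / (2 * (gamma p * beta p)))).
Definition nu := Rmin (qx / 4) (Rmin qv (Rmin (wA * qe / 2) (1 / 2))).

Lemma qx_pos : 0 < qx.
Proof. params_pos_facts Hp. unfold qx. apply Rdiv_lt_0_compat; repeat apply Rmult_lt_0_compat; lra. Qed.

Lemma qv_pos : 0 < qv.
Proof. params_pos_facts Hp. unfold qv. apply Rdiv_lt_0_compat; repeat apply Rmult_lt_0_compat; lra. Qed.

Lemma qe_pos : 0 < qe.
Proof. params_pos_facts Hp. unfold qe, kE. apply Rmult_lt_0_compat; nra. Qed.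

Lemma qi_pos : 0 < qi.
Proof.
  params_pos_facts Hp. pose proof (S0_pos p Hp). unfold qi, kI.
  apply Rmult_lt_0_compat; [lra|]. apply Rmult_lt_0_compat; nra.
Qed.

Lemma Y1_ge0 : 0 <= Y1.
Proof.
  unfold Y1. pose proof qx_pos.
  apply Rmult_le_pos; [apply pow2_ge_0|apply Rlt_le, Rinv_0_lt_compat; lra].
Qed.

Lemma Y2_ge0 : 0 <= Y2.
Proof.
  unfold Y2. pose proof qx_pos.
  apply Rmult_le_pos; [apply pow2_ge_0|apply Rlt_le, Rinv_0_lt_compat; lra].
Qed.

Lemma wR_pos : 0 < wR.
Proof. params_pos_facts Hp. pose proof Y1_ge0. unfold wR, kR. apply Rdiv_lt_0_compat; lra. Qed.

Lemma wT_pos : 0 < wT.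
Proof.
  params_pos_facts Hp. pose proof wR_pos. unfold wT, kR, kT.
  assert (0 <= wR * alpha p ^ 2 / (eta p + mu p))
    by (apply Rmult_le_pos; [nra|apply Rlt_le, Rinv_0_lt_compat; lra]).
  apply Rdiv_lt_0_compat; lra.
Qed.

Lemma wA_pos : 0 < wA.
Proof.
  params_pos_facts Hp. pose proof wT_pos. pose proof Y2_ge0. pose proof qi_pos. unfold wA, kT.
  assert (0 <= wT * delta p ^ 2 / (alpha p + omega p + mu p) / 2)
    by (apply Rmult_le_pos; [apply Rmult_le_pos; [nra|apply Rlt_le, Rinv_0_lt_compat; lra]|lra]).
  apply Rdiv_lt_0_compat; lra.
Qed.

Lemma r0_pos : 0 < r0.
Proof.
  params_pos_facts Hp. pose proof qx_pos. pose proof qe_pos. pose proof qi_pos.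
  unfold r0. repeat apply Rmin_pos; apply Rdiv_lt_0_compat; nra.
Qed.

Lemma nu_pos : 0 < nu.
Proof.
  pose proof qx_pos. pose proof qv_pos. pose proof qe_pos. pose proof wA_pos.
  unfold nu. repeat apply Rmin_pos; nra.
Qed.

Lemma lyap_weights_bounds :
  let w := lyap_weights in
  wmin <= sS w <= wmax /\ wmin <= sV w <= wmax /\ wmin <= sE w <= wmax /\
  wmin <= sI w <= wmax /\ wmin <= sT w <= wmax /\ wmin <= sR w <= wmax.
Proof.
  params_pos_facts Hp. pose proof (S0_pos p Hp). pose proof wA_pos. pose proof wT_pos. pose proof wR_pos.
  assert (0 < wA * gamma p) by nra. assert (0 < wA * beta p * S0 p) by (apply Rmult_lt_0_compat; nra).
  unfold wmin, wmax, lyap_weights; cbn [sS sV sE sI sT sR].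
  set (a2 := wA * gamma p) in *. set (a3 := wA * beta p * S0 p) in *.
  pose proof (Rmin_l (pi_ p) (Rmin (theta p) (Rmin a2 (Rmin a3 (Rmin wT wR))))).
  pose proof (Rmin_r (pi_ p) (Rmin (theta p) (Rmin a2 (Rmin a3 (Rmin wT wR))))).
  pose proof (Rmin_l (theta p) (Rmin a2 (Rmin a3 (Rmin wT wR)))).
  pose proof (Rmin_r (theta p) (Rmin a2 (Rmin a3 (Rmin wT wR)))).
  pose proof (Rmin_l a2 (Rmin a3 (Rmin wT wR))). pose proof (Rmin_r a2 (Rmin a3 (Rmin wT wR))).
  pose proof (Rmin_l a3 (Rmin wT wR)). pose proof (Rmin_r a3 (Rmin wT wR)).
  pose proof (Rmin_l wT wR). pose proof (Rmin_r wT wR).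
  repeat split; lra.
Qed.

Lemma wmin_pos : 0 < wmin.
Proof.
  params_pos_facts Hp. pose proof (S0_pos p Hp). pose proof wA_pos. pose proof wT_pos.
  pose proof wR_pos. assert (0 < wA * gamma p) by nra.
  assert (0 < wA * beta p * S0 p) by (apply Rmult_lt_0_compat; nra).
  unfold wmin. repeat apply Rmin_pos; assumption.
Qed.

Lemma wmin_le_wmax : wmin <= wmax.
Proof. destruct lyap_weights_bounds as [[H1 H2] _]. lra. Qed.

Lemma lyap_bounds z : wmin * sqdist z (E0 p) <= lyap z <= wmax * sqdist z (E0 p).
Proof.
  destruct lyap_weights_bounds as (H0&H1&H2&H3&H4&H5). now apply wsqdist_bounds.
Qed.

Lemma sv_block x v :
  qx * x^2 + qv * v^2 <=
  pi_ p * (pi_ p + mu p) * x^2 - 2 * pi_ p * theta p * x * v + theta p * (theta p + mu p) * v^2.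
Proof.
  params_pos_facts Hp.
  assert (Hid : pi_ p * (pi_ p + mu p) * x^2 - 2 * pi_ p * theta p * x * v
                + theta p * (theta p + mu p) * v^2 - (qx * x^2 + qv * v^2)
              = pi_ p * theta p / ((theta p + mu p) * (pi_ p + mu p))
                * ((pi_ p + mu p) * x - (theta p + mu p) * v)^2)
    by (unfold qx, qv; field; lra).
  enough (0 <= pi_ p * theta p / ((theta p + mu p) * (pi_ p + mu p))
               * ((pi_ p + mu p) * x - (theta p + mu p) * v)^2) by lra.
  apply Rmult_le_pos; [apply Rmult_le_pos; [nra|apply Rlt_le, Rinv_0_lt_compat; nra]|apply pow2_ge_0].
Qed.

(* This is where [Rv p < 1] enters: [Rv p] is the squared ratio of the off-diagonal
   coefficient to the geometric mean of the diagonal ones. *)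
Lemma ei_block e i :
  qe * e^2 + qi * i^2 <=
  gamma p * kE p * e^2 - 2 * gamma p * beta p * S0 p * e * i + beta p * S0 p * kI p * i^2.
Proof.
  params_pos_facts Hp. pose proof (S0_pos p Hp) as HS.
  assert (Hke : 0 < kE p) by (unfold kE; lra). assert (Hki : 0 < kI p) by (unfold kI; lra).
  assert (Hrv0 : 0 <= Rv p).
  { rewrite (Rv_eq p Hp). apply Rlt_le, Rdiv_lt_0_compat; [|nra].
    apply Rmult_lt_0_compat; [nra|exact HS]. }
  assert (Hid : gamma p * kE p * e^2 - 2 * gamma p * beta p * S0 p * e * i
                + beta p * S0 p * kI p * i^2 - (qe * e^2 + qi * i^2)
              = (1 + Rv p) / 2 * (gamma p * kE p) * e^2 - 2 * (gamma p * beta p * S0 p) * e * i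
                + (1 + Rv p) / 2 * (beta p * S0 p * kI p) * i^2) by (unfold qe, qi; field).
  enough (0 <= (1 + Rv p) / 2 * (gamma p * kE p) * e^2 - 2 * (gamma p * beta p * S0 p) * e * i
               + (1 + Rv p) / 2 * (beta p * S0 p * kI p) * i^2) by lra.
  apply binary_form_nonneg; [lra|nra|apply Rmult_lt_0_compat; nra|].
  assert (Hq : (gamma p * beta p * S0 p)^2 = Rv p * ((gamma p * kE p) * (beta p * S0 p * kI p)))
    by (rewrite (Rv_eq p Hp); field; lra).
  rewrite Hq.
  assert (HP : 0 < (gamma p * kE p) * (beta p * S0 p * kI p))
    by (apply Rmult_lt_0_compat; [nra|apply Rmult_lt_0_compat; nra]).
  assert (Rv p <= ((1 + Rv p) / 2)^2) by (pose proof (pow2_ge_0 (1 - Rv p)); nra).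
  replace (((1 + Rv p) / 2) ^ 2 * (gamma p * kE p) * (beta p * S0 p * kI p))
    with (((1 + Rv p) / 2) ^ 2 * ((gamma p * kE p) * (beta p * S0 p * kI p))) by ring.
  apply Rmult_le_compat_r; lra.
Qed.

(* Half the derivative of [lyap] along the field, in the deviations
   [x = S - S0, v = V - V0] and [e, i, t, r] from the equilibrium. *)
Definition lyap_rate_dev (x v e i t r : R) : R :=
  pi_ p * x * (eta p * r + theta p * v - (pi_ p + mu p) * x - beta p * S0 p * i - beta p * x * i)
  + theta p * v * (pi_ p * x - (theta p + mu p) * v)
  + wA * gamma p * e * (beta p * S0 p * i + beta p * x * i - kE p * e)
  + wA * beta p * S0 p * i * (gamma p * e - kI p * i)
  + wT * t * (delta p * i - kT p * t) + wR * r * (alpha p * t - kR p * r).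

Lemma wsqdist_rate_lyap z :
  wsqdist_rate p lyap_weights z (E0 p) =
  2 * lyap_rate_dev (sS z - S0 p) (sV z - V0 p) (sE z) (sI z) (sT z) (sR z).
Proof.
  unfold wsqdist_rate. rewrite (fS_E0_dev p z Hp), (fV_E0_dev p z Hp), (fE_E0_dev p z).
  unfold lyap_rate_dev, lyap_weights, S0, V0, E0, fI, fT, fR, kI, kT, kR; simpl. ring.
Qed.

Lemma r0_bounds :
  pi_ p * beta p * r0 <= qx / 4 /\ gamma p * beta p * r0 <= qe /\ gamma p * beta p * r0 <= qi / 2.
Proof.
  params_pos_facts Hp.
  assert (R1 : r0 <= qx / (4 * (pi_ p * beta p))) by (unfold r0; apply Rmin_l).
  assert (R2 : r0 <= qe / (gamma p * beta p))
    by (unfold r0; eapply Rle_trans; [apply Rmin_r|apply Rmin_l]).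
  assert (R3 : r0 <= qi / (2 * (gamma p * beta p)))
    by (unfold r0; eapply Rle_trans; [apply Rmin_r|apply Rmin_r]).
  apply (Rmult_le_compat_l (pi_ p * beta p)) in R1; [|nra].
  apply (Rmult_le_compat_l (gamma p * beta p)) in R2; [|nra].
  apply (Rmult_le_compat_l (gamma p * beta p)) in R3; [|nra].
  replace (pi_ p * beta p * (qx / (4 * (pi_ p * beta p)))) with (qx / 4) in R1 by (field; lra).
  replace (gamma p * beta p * (qe / (gamma p * beta p))) with qe in R2 by (field; lra).
  replace (gamma p * beta p * (qi / (2 * (gamma p * beta p)))) with (qi / 2) in R3 by (field; lra).
  lra.
Qed.

Lemma lyap_coupling_terms_le x i t r :
  pi_ p * eta p * x * r <= qx / 4 * x^2 + Y1 * r^2 /\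
  - (pi_ p * beta p * S0 p) * x * i <= qx / 4 * x^2 + Y2 * i^2 /\
  wT * delta p * t * i <= wT * kT p / 2 * t^2 + wT * delta p ^ 2 / kT p / 2 * i^2 /\
  wR * alpha p * r * t <= wR * kR p / 2 * r^2 + wR * alpha p ^ 2 / kR p / 2 * t^2.
Proof.
  params_pos_facts Hp. pose proof qx_pos. pose proof wT_pos. pose proof wR_pos.
  assert (Hkt : 0 < kT p) by (unfold kT; lra). assert (Hkr : 0 < kR p) by (unfold kR; lra).
  repeat split.
  - replace Y1 with ((pi_ p * eta p)^2 / (4 * (qx / 4))) by (unfold Y1; field; lra).
    apply young_ineq. lra.
  - replace Y2 with ((- (pi_ p * beta p * S0 p))^2 / (4 * (qx / 4))) by (unfold Y2; field; lra).
    apply young_ineq. lra.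
  - replace (wT * delta p ^ 2 / kT p / 2) with ((wT * delta p)^2 / (4 * (wT * kT p / 2)))
      by (field; lra).
    apply young_ineq. nra.
  - replace (wR * alpha p ^ 2 / kR p / 2) with ((wR * alpha p)^2 / (4 * (wR * kR p / 2)))
      by (field; lra).
    apply young_ineq. nra.
Qed.

Lemma lyap_nonlinear_terms_le x e i : Rabs x <= r0 -> Rabs i <= r0 ->
  - (pi_ p * beta p) * x^2 * i <= qx / 4 * x^2 /\
  wA * gamma p * beta p * x * e * i <= wA * qe / 2 * e^2 + wA * qi / 4 * i^2.
Proof.
  intros Hx Hi. params_pos_facts Hp. pose proof wA_pos.
  destruct r0_bounds as (Hr1&Hr2&Hr3).
  pose proof (pow2_ge_0 x). pose proof (pow2_ge_0 e). pose proof (pow2_ge_0 i).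
  split.
  - assert (- i <= r0) by (pose proof (Rle_abs (- i)); rewrite Rabs_Ropp in *; lra).
    assert (0 < pi_ p * beta p) by nra.
    assert (x^2 * (- i) <= x^2 * r0) by (apply Rmult_le_compat_l; lra). nra.
  - pose proof (cubic_term_le x e i r0 Hx) as Hc.
    assert (0 < wA * gamma p * beta p) by (apply Rmult_lt_0_compat; nra).
    apply Rmult_le_compat_l with (r := wA * gamma p * beta p) in Hc; [|lra].
    assert (wA * (gamma p * beta p * r0) * e^2 <= wA * qe * e^2)
      by (apply Rmult_le_compat_r; [lra|apply Rmult_le_compat_l; lra]).
    assert (wA * (gamma p * beta p * r0) * i^2 <= wA * (qi / 2) * i^2)
      by (apply Rmult_le_compat_r; [lra|apply Rmult_le_compat_l; lra]).
    lra.
Qed.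

Lemma lyap_rate_dev_le x v e i t r : Rabs x <= r0 -> Rabs i <= r0 ->
  lyap_rate_dev x v e i t r <=
  - (qx / 4) * x^2 - qv * v^2 - (wA * qe / 2) * e^2 - i^2 - (1 / 2) * t^2 - r^2.
Proof.
  intros Hx Hi. params_pos_facts Hp.
  pose proof qi_pos. pose proof Y2_ge0. pose proof wA_pos. pose proof wT_pos. pose proof wR_pos.
  assert (Hkt : 0 < kT p) by (unfold kT; lra). assert (Hkr : 0 < kR p) by (unfold kR; lra).
  destruct (lyap_coupling_terms_le x i t r) as (Cxr&Cxi&Cti&Crt).
  destruct (lyap_nonlinear_terms_le x e i Hx Hi) as (Cxxi&Cxei).
  pose proof (sv_block x v) as Bsv. pose proof (ei_block e i) as Bei.
  apply (Rmult_le_compat_l wA) in Bei; [|lra].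
  pose proof (pow2_ge_0 i). pose proof (pow2_ge_0 t).
  assert (HwR : wR * kR p * r^2 = 2 * (Y1 + 1) * r^2) by (unfold wR; field; lra).
  assert (HwT : wT * kT p * t^2 = (2 * (wR * alpha p ^ 2 / kR p) + 1) * t^2)
    by (unfold wT; field; lra).
  assert (HwA : wA * qi * i^2 = 8 * (Y2 + wT * delta p ^ 2 / kT p / 2 + 1) * i^2)
    by (unfold wA; field; lra).
  assert (Hdiv : forall a k u, 0 <= a -> 0 < k -> 0 <= u -> 0 <= a / k / 2 * u)
    by (intros; apply Rmult_le_pos; [apply Rmult_le_pos; [apply Rmult_le_pos|]|]; auto;
        [apply Rlt_le, Rinv_0_lt_compat|]; lra).
  assert (0 <= wT * delta p ^ 2 / kT p / 2 * i^2) by (apply Hdiv; nra).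
  assert (0 <= wR * alpha p ^ 2 / kR p / 2 * t^2) by (apply Hdiv; nra).
  assert (0 <= Y2 * i^2) by nra.
  unfold lyap_rate_dev. lra.
Qed.

Lemma lyap_rate_le z : Rabs (sS z - S0 p) <= r0 -> Rabs (sI z) <= r0 ->
  wsqdist_rate p lyap_weights z (E0 p) <= - 2 * nu * sqdist z (E0 p).
Proof.
  intros Hx Hi. rewrite wsqdist_rate_lyap.
  pose proof (lyap_rate_dev_le (sS z - S0 p) (sV z - V0 p) (sE z) (sI z) (sT z) (sR z) Hx Hi) as H.
  assert (Hnu : nu <= qx / 4 /\ nu <= qv /\ nu <= wA * qe / 2 /\ nu <= 1 / 2).
  { unfold nu. pose proof (Rmin_l (qx / 4) (Rmin qv (Rmin (wA * qe / 2) (1 / 2)))).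
    pose proof (Rmin_r (qx / 4) (Rmin qv (Rmin (wA * qe / 2) (1 / 2)))).
    pose proof (Rmin_l qv (Rmin (wA * qe / 2) (1 / 2))).
    pose proof (Rmin_r qv (Rmin (wA * qe / 2) (1 / 2))).
    pose proof (Rmin_l (wA * qe / 2) (1 / 2)). pose proof (Rmin_r (wA * qe / 2) (1 / 2)).
    repeat split; lra. }
  destruct Hnu as (N1&N2&N3&N4).
  unfold sqdist, wsqdist. change (sS (E0 p)) with (S0 p). change (sV (E0 p)) with (V0 p).
  cbn [sS sV sE sI sT sR E0]. rewrite !Rminus_0_r.
  pose proof (pow2_ge_0 (sS z - S0 p)). pose proof (pow2_ge_0 (sV z - V0 p)).
  pose proof (pow2_ge_0 (sE z)). pose proof (pow2_ge_0 (sI z)).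
  pose proof (pow2_ge_0 (sT z)). pose proof (pow2_ge_0 (sR z)).
  nra.
Qed.

Lemma lyap_along_solution b x r : 0 < r <= r0 -> is_solution p b x ->
  sqdist (x 0) (E0 p) < (r * wmin / wmax)^2 ->
  forall t, 0 <= t -> Rbar_lt t b ->
  sqdist (x t) (E0 p) < r^2 /\ lyap (x t) * exp (2 * nu / wmax * t) <= lyap (x 0).
Proof.
  intros Hr Hs H0 t Ht Htb.
  pose proof wmin_pos. pose proof nu_pos. pose proof (lyap_bounds (x 0)) as [_ HB0].
  pose proof wmin_le_wmax as HmM.
  assert (HK : 0 < wmin * r^2) by (apply Rmult_lt_0_compat; [lra|apply pow_lt; lra]).
  assert (Hc : 0 <= 2 * nu / wmax) by (apply Rlt_le, Rdiv_lt_0_compat; lra).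
  assert (HL0 : lyap (x 0) < wmin * r^2).
  { eapply Rle_lt_trans; [exact HB0|].
    apply Rlt_le_trans with (wmax * (r * wmin / wmax)^2); [apply Rmult_lt_compat_l; lra|].
    replace (wmax * (r * wmin / wmax)^2) with (wmin * r^2 * (wmin / wmax)) by (field; lra).
    assert (wmin / wmax <= 1).
    { unfold Rdiv. rewrite <- (Rinv_r wmax) by lra.
      apply Rmult_le_compat_r; [apply Rlt_le, Rinv_0_lt_compat|]; lra. }
    rewrite <- (Rmult_1_r (wmin * r^2)) at 2. apply Rmult_le_compat_l; lra. }
  assert (Hdec : forall s, 0 < s -> Rbar_lt s b -> lyap (x s) < wmin * r^2 ->
            wsqdist_rate p lyap_weights (x s) (E0 p) + 2 * nu / wmax * lyap (x s) <= 0).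
  { intros s Hs0 Hsb HLs. destruct (lyap_bounds (x s)) as [Hl Hu].
    assert (Hsq : sqdist (x s) (E0 p) < r^2) by nra.
    destruct (sq_le_sqdist (x s) (E0 p)) as [C1 C2].
    assert (Hx : Rabs (sS (x s) - S0 p) <= r0).
    { apply Rlt_le, Rlt_le_trans with r; [|lra]. apply Rabs_lt_of_sq_lt; [lra|]. unfold S0. lra. }
    assert (Hi : Rabs (sI (x s)) <= r0).
    { apply Rlt_le, Rlt_le_trans with r; [|lra]. apply Rabs_lt_of_sq_lt; [lra|].
      pose proof (pow2_ge_0 (sE (x s) - sE (E0 p))).
      replace (sI (x s)) with (sI (x s) - sI (E0 p)) by (simpl; ring). lra. }
    pose proof (lyap_rate_le (x s) Hx Hi).
    assert (lyap (x s) / wmax <= sqdist (x s) (E0 p)).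
    { apply (Rmult_le_reg_r wmax); [lra|]. unfold Rdiv. rewrite Rmult_assoc, Rinv_l by lra. lra. }
    replace (2 * nu / wmax * lyap (x s)) with (2 * nu * (lyap (x s) / wmax)) by (field; lra).
    nra. }
  destruct (lyapunov_decay (fun u => lyap (x u)) (fun u => wsqdist_rate p lyap_weights (x u) (E0 p))
              b _ _ HK Hc HL0 (right_cont0_wsqdist p b x _ _ Hs)
              (fun s Hs0 Hsb => is_derive_wsqdist p b x _ _ s Hs Hs0 Hsb) Hdec t Ht Htb) as [D1 D2].
  split; [|exact D2]. destruct (lyap_bounds (x t)) as [Hl _]. nra.
Qed.

Lemma E0_lyap_stable : lyap_stable p (E0 p).
Proof.
  pose proof wmin_pos. pose proof r0_pos.
  pose proof wmin_le_wmax as HmM.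
  intros eps Heps. set (r := Rmin r0 eps).
  assert (Hr : 0 < r) by (apply Rmin_pos; lra).
  assert (Hr0 : r <= r0) by apply Rmin_l. assert (Hre : r <= eps) by apply Rmin_r.
  exists (r * wmin / wmax). split; [apply Rdiv_lt_0_compat; nra|].
  intros b x Hs Hd t Ht Htb. apply dist6_lt in Hd; [|apply Rdiv_lt_0_compat; nra].
  destruct (lyap_along_solution b x r (conj Hr Hr0) Hs Hd t Ht Htb) as [D1 _].
  apply dist6_lt; [exact Heps|]. assert (r^2 <= eps^2) by (apply pow_incr; lra). lra.
Qed.

Lemma E0_loc_attractive : loc_attractive p (E0 p).
Proof.
  pose proof wmin_pos. pose proof r0_pos. pose proof nu_pos.
  pose proof wmin_le_wmax as HmM.
  exists (r0 * wmin / wmax). split; [apply Rdiv_lt_0_compat; nra|].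
  intros x Hs Hd. apply dist6_lt in Hd; [|apply Rdiv_lt_0_compat; nra].
  apply (is_lim_of_sq_exp_bound _ (lyap (x 0) / wmin) (2 * nu / wmax)); [apply Rdiv_lt_0_compat; lra|].
  intros t Ht. split; [apply sqrt_pos|].
  destruct (lyap_along_solution p_infty x r0 (conj r0_pos (Rle_refl r0)) Hs Hd t Ht I) as [_ D].
  destruct (lyap_bounds (x t)) as [Hl _].
  replace (dist6 (x t) (E0 p) ^ 2) with (sqdist (x t) (E0 p)).
  - apply (Rmult_le_reg_l wmin); [lra|].
    replace (wmin * (lyap (x 0) / wmin)) with (lyap (x 0)) by (field; lra).
    pose proof (exp_pos (2 * nu / wmax * t)). nra.
  - unfold dist6. rewrite pow2_sqrt; [unfold sqdist, wsqdist; cbn [sS sV sE sI sT sR]; ring|].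
    pose proof (sqdist_ge0 (x t) (E0 p)). unfold sqdist, wsqdist in H2; cbn [sS sV sE sI sT sR] in H2.
    lra.
Qed.

End Stability.

(** * Instability when [Rv p > 1] *)

Definition quad_form (P Q e i : R) : R := P * e^2 + 2 * e * i + Q * i^2.

Lemma quad_form_pos_somewhere P Q : P * Q < 1 -> exists e i, 0 < quad_form P Q e i.
Proof.
  intros H. unfold quad_form. destruct (Rlt_le_dec Q 0) as [HQ|HQ].
  - exists (- Q), 1. nra.
  - set (u := / (Rabs P + 1)). pose proof (Rabs_pos P).
    assert (Hu : 0 < u) by (apply Rinv_0_lt_compat; lra).
    assert (Hu1 : u * (Rabs P + 1) = 1) by (unfold u; apply Rinv_l; lra).
    assert (- Rabs P <= P) by (pose proof (Rle_abs (- P)); rewrite Rabs_Ropp in *; lra).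
    exists u, 1. nra.
Qed.

Lemma Rabs_quad_form_le P Q e i :
  Rabs (quad_form P Q e i) <= (Rabs P + 1 + Rabs Q) * (e^2 + i^2).
Proof.
  unfold quad_form.
  assert (Hei : Rabs (2 * e * i) <= e^2 + i^2).
  { rewrite !Rabs_mult, (Rabs_right 2), <- (pow2_abs e), <- (pow2_abs i) by lra.
    pose proof (pow2_ge_0 (Rabs e - Rabs i)). nra. }
  assert (HP : Rabs (P * e^2) = Rabs P * e^2)
    by (rewrite Rabs_mult, (Rabs_right (e^2)); [ring|apply Rle_ge, pow2_ge_0]).
  assert (HQ : Rabs (Q * i^2) = Rabs Q * i^2)
    by (rewrite Rabs_mult, (Rabs_right (i^2)); [ring|apply Rle_ge, pow2_ge_0]).
  pose proof (Rabs_triang (P * e^2 + 2 * e * i) (Q * i^2)).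
  pose proof (Rabs_triang (P * e^2) (2 * e * i)).
  pose proof (Rabs_pos P). pose proof (Rabs_pos Q). pose proof (pow2_ge_0 e). pose proof (pow2_ge_0 i).
  nra.
Qed.

Lemma is_derive_quad_form (g h : R -> R) dg dh P Q t :
  is_derive g t dg -> is_derive h t dh ->
  is_derive (fun u => quad_form P Q (g u) (h u)) t
    (2 * P * g t * dg + 2 * (dg * h t + g t * dh) + 2 * Q * h t * dh).
Proof.
  intros Hg Hh. unfold quad_form. auto_derive.
  - repeat split; eexists; eassumption.
  - change (fun x => g x) with g. change (fun x => h x) with h.
    rewrite (is_derive_unique _ _ _ Hg), (is_derive_unique _ _ _ Hh). ring.
Qed.

Lemma continuity_pt_quad_form P Q (g h : R -> R) t : continuity_pt g t -> continuity_pt h t ->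
  continuity_pt (fun u => quad_form P Q (g u) (h u)) t.
Proof.
  intros Hg Hh.
  apply continuity_pt_ext with (f := fun u => P * (g u * g u) + 2 * g u * h u + Q * (h u * h u));
    [intros; unfold quad_form; ring|].
  repeat apply continuity_pt_plus; repeat apply continuity_pt_mult; auto; apply continuity_pt_cst.
Qed.

Lemma quad_form_perturbation_le P X e i m : 0 < m -> Rabs X <= m / (2 * (Rabs P + 1)) ->
  Rabs (2 * (P * e + i) * (X * i)) <= m * (e^2 + i^2).
Proof.
  intros Hm HX. pose proof (Rabs_pos P). pose proof (Rabs_pos X).
  pose proof (Rabs_pos e). pose proof (Rabs_pos i).
  assert (HX' : 2 * (Rabs P + 1) * Rabs X <= m).
  { apply (Rmult_le_compat_l (2 * (Rabs P + 1))) in HX; [|lra].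
    replace (2 * (Rabs P + 1) * (m / (2 * (Rabs P + 1)))) with m in HX by (field; lra). lra. }
  assert (Hei : Rabs e * Rabs i <= (e^2 + i^2) / 2).
  { rewrite <- (pow2_abs e), <- (pow2_abs i). pose proof (pow2_ge_0 (Rabs e - Rabs i)). nra. }
  assert (Hprod : Rabs (P * e + i) * Rabs i <= (Rabs P + 1) * (e^2 + i^2)).
  { pose proof (Rabs_triang (P * e) i) as Ht. rewrite Rabs_mult in Ht.
    apply Rle_trans with ((Rabs P * Rabs e + Rabs i) * Rabs i); [apply Rmult_le_compat_r; lra|].
    assert (Rabs P * (Rabs e * Rabs i) <= Rabs P * ((e^2 + i^2) / 2)) by (apply Rmult_le_compat_l; lra).
    assert (Rabs i * Rabs i = i^2) by (rewrite <- pow2_abs; ring).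
    assert (0 <= Rabs P * (e^2 + i^2)) by (apply Rmult_le_pos; [lra|nra]).
    pose proof (pow2_ge_0 e). lra. }
  rewrite !Rabs_mult, (Rabs_right 2) by lra.
  assert (He2 : 0 <= e^2 + i^2) by (pose proof (pow2_ge_0 e); pose proof (pow2_ge_0 i); lra).
  replace (2 * Rabs (P * e + i) * (Rabs X * Rabs i))
    with (2 * Rabs X * (Rabs (P * e + i) * Rabs i)) by ring.
  apply Rle_trans with (2 * Rabs X * ((Rabs P + 1) * (e^2 + i^2))); [apply Rmult_le_compat_l; lra|].
  replace (2 * Rabs X * ((Rabs P + 1) * (e ^ 2 + i ^ 2)))
    with ((2 * (Rabs P + 1) * Rabs X) * (e^2 + i^2)) by ring.
  apply Rmult_le_compat_r; lra.
Qed.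

(* The linear (E, I) block [e' = bb i - a e], [i' = c e - d i], which has a
   positive eigenvalue when [a d < bb c]; [chetaev_P], [chetaev_Q] solve the
   Lyapunov equation making the derivative of [quad_form] positive definite. *)
Section ChetaevForm.

Variables a bb c d : R.
Hypotheses (Ha : 0 < a) (Hbb : 0 < bb) (Hc : 0 < c) (Hd : 0 < d).

Definition chetaev_P := c / a - (a + d) * (bb * c - a * d) / (2 * a * bb * d).
Definition chetaev_Q := bb / d - (a + d) * (bb * c - a * d) / (2 * a * c * d).
Definition chetaev_me := (a + d) * (bb * c - a * d) / (bb * d).
Definition chetaev_mi := (a + d) * (bb * c - a * d) / (a * c).

Lemma chetaev_rate_identity X e i :
  2 * chetaev_P * e * (bb * i + X * i - a * e) + 2 * ((bb * i + X * i - a * e) * i + e * (c * e - d * i))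
  + 2 * chetaev_Q * i * (c * e - d * i)
  = chetaev_me * e^2 + chetaev_mi * i^2 + 2 * (chetaev_P * e + i) * (X * i).
Proof. unfold chetaev_P, chetaev_Q, chetaev_me, chetaev_mi. field. lra. Qed.

Hypothesis Hunst : a * d < bb * c.

Lemma chetaev_coeffs_pos : 0 < chetaev_me /\ 0 < chetaev_mi.
Proof.
  unfold chetaev_me, chetaev_mi.
  split; apply Rdiv_lt_0_compat; apply Rmult_lt_0_compat; lra.
Qed.

Lemma chetaev_PQ_lt_1 : chetaev_P * chetaev_Q < 1.
Proof.
  assert (Hid : 1 - chetaev_P * chetaev_Q =
    (bb * c - a * d) * (bb * c * (a - d)^2 + a * d * (a + d)^2) / (4 * a^2 * bb * c * d^2))
    by (unfold chetaev_P, chetaev_Q; field; lra).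
  enough (0 < (bb * c - a * d) * (bb * c * (a - d)^2 + a * d * (a + d)^2) / (4 * a^2 * bb * c * d^2))
    by lra.
  assert (0 <= bb * c * (a - d)^2) by (apply Rmult_le_pos; [nra|apply pow2_ge_0]).
  assert (0 < a * d * (a + d)^2) by (apply Rmult_lt_0_compat; [nra|apply pow_lt; lra]).
  apply Rdiv_lt_0_compat; [apply Rmult_lt_0_compat; lra|].
  assert (0 < a^2) by (apply pow_lt; lra). assert (0 < d^2) by (apply pow_lt; lra).
  repeat apply Rmult_lt_0_compat; lra.
Qed.

End ChetaevForm.

Definition clamp (M u : R) : R := Rmax (- M) (Rmin M u).

Lemma Rabs_clamp_le M u : 0 <= M -> Rabs (clamp M u) <= M.
Proof.
  intros H. unfold clamp, Rmax, Rmin.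
  destruct (Rle_dec M u); destruct (Rle_dec (- M) _); unfold Rabs; destruct Rcase_abs; lra.
Qed.

Lemma clamp_lipschitz M u v : 0 <= M -> Rabs (clamp M u - clamp M v) <= Rabs (u - v).
Proof.
  intros H. unfold clamp, Rmax, Rmin.
  destruct (Rle_dec M u); destruct (Rle_dec M v);
  repeat match goal with |- context [Rle_dec ?a ?b] => destruct (Rle_dec a b) end;
  unfold Rabs; repeat destruct Rcase_abs; lra.
Qed.

Lemma clamp_id M u : Rabs u <= M -> clamp M u = u.
Proof.
  intros H. apply Rabs_le_between in H. unfold clamp.
  rewrite Rmin_right, Rmax_right by lra. reflexivity.
Qed.

Lemma clamp_mul_lipschitz M a b a' b' : 0 <= M ->
  Rabs (clamp M a * clamp M b - clamp M a' * clamp M b') <= M * (Rabs (a - a') + Rabs (b - b')).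
Proof.
  intros HM.
  replace (clamp M a * clamp M b - clamp M a' * clamp M b')
    with (clamp M a * (clamp M b - clamp M b') + clamp M b' * (clamp M a - clamp M a')) by ring.
  eapply Rle_trans; [apply Rabs_triang|]. rewrite !Rabs_mult.
  pose proof (Rabs_clamp_le M a HM). pose proof (Rabs_clamp_le M b' HM).
  pose proof (clamp_lipschitz M a a' HM). pose proof (clamp_lipschitz M b b' HM).
  pose proof (Rabs_pos (clamp M a)). pose proof (Rabs_pos (clamp M b')).
  pose proof (Rabs_pos (clamp M b - clamp M b')). pose proof (Rabs_pos (clamp M a - clamp M a')).
  nra.
Qed.

(* The field with the incidence [S I] replaced by a bounded, globally Lipschitz
   version; it agrees with the model wherever [|S|, |I| <= M]. *)
Definition clamped_field (p : params) (M : R) (i : nat) (y : nat -> R) : R :=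
  let q := beta p * (clamp M (y 0%nat) * clamp M (y 3%nat)) in
  match i with
  | 0%nat => Lam p + eta p * y 5%nat + theta p * y 1%nat - q - (pi_ p + mu p) * y 0%nat
  | 1%nat => pi_ p * y 0%nat - (theta p + mu p) * y 1%nat
  | 2%nat => q - (gamma p + mu p) * y 2%nat
  | 3%nat => gamma p * y 2%nat - (delta p + tau p + mu p) * y 3%nat
  | 4%nat => delta p * y 3%nat - (alpha p + omega p + mu p) * y 4%nat
  | 5%nat => alpha p * y 4%nat - (eta p + mu p) * y 5%nat
  | _ => 0
  end.

Definition rate_sum (p : params) : R :=
  pi_ p + mu p + theta p + eta p + gamma p + delta p + tau p + alpha p + omega p.

Lemma Rabs_lincomb6_le a0 a1 a2 a3 a4 a5 s q A B (w : nat -> R) :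
  Rabs a0 <= A -> Rabs a1 <= A -> Rabs a2 <= A -> Rabs a3 <= A -> Rabs a4 <= A -> Rabs a5 <= A ->
  0 <= B -> Rabs s <= 1 -> Rabs q <= B * (Rabs (w 0%nat) + Rabs (w 3%nat)) ->
  Rabs (a0 * w 0%nat + a1 * w 1%nat + a2 * w 2%nat + a3 * w 3%nat + a4 * w 4%nat + a5 * w 5%nat
        + s * q) <= (A + B) * l1norm 6 w.
Proof.
  intros H0 H1 H2 H3 H4 H5 HB Hs Hq. simpl.
  assert (Hm : forall a x, Rabs a <= A -> Rabs (a * x) <= A * Rabs x)
    by (intros a x Ha; rewrite Rabs_mult; apply Rmult_le_compat_r; [apply Rabs_pos|exact Ha]).
  assert (Hsq : Rabs (s * q) <= B * (Rabs (w 0%nat) + Rabs (w 3%nat))).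
  { rewrite Rabs_mult. pose proof (Rabs_pos s). pose proof (Rabs_pos q). nra. }
  pose proof (Hm _ (w 0%nat) H0). pose proof (Hm _ (w 1%nat) H1). pose proof (Hm _ (w 2%nat) H2).
  pose proof (Hm _ (w 3%nat) H3). pose proof (Hm _ (w 4%nat) H4). pose proof (Hm _ (w 5%nat) H5).
  set (u0 := a0 * w 0%nat) in *. set (u1 := a1 * w 1%nat) in *. set (u2 := a2 * w 2%nat) in *.
  set (u3 := a3 * w 3%nat) in *. set (u4 := a4 * w 4%nat) in *. set (u5 := a5 * w 5%nat) in *.
  pose proof (Rabs_triang (u0 + u1 + u2 + u3 + u4 + u5) (s * q)).
  pose proof (Rabs_triang (u0 + u1 + u2 + u3 + u4) u5).
  pose proof (Rabs_triang (u0 + u1 + u2 + u3) u4).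
  pose proof (Rabs_triang (u0 + u1 + u2) u3).
  pose proof (Rabs_triang (u0 + u1) u2).
  pose proof (Rabs_triang u0 u1).
  pose proof (Rabs_pos (w 1%nat)). pose proof (Rabs_pos (w 2%nat)).
  pose proof (Rabs_pos (w 4%nat)). pose proof (Rabs_pos (w 5%nat)).
  assert (0 <= B * Rabs (w 1%nat) + B * Rabs (w 2%nat) + B * Rabs (w 4%nat) + B * Rabs (w 5%nat)) by nra.
  lra.
Qed.

Lemma clamped_field_lipschitz p M : params_pos p -> 0 <= M ->
  lipschitz_field 6 (clamped_field p M) (rate_sum p + beta p * M).
Proof.
  intros Hp HM i y z Hi. params_pos_facts Hp.
  set (cq := fun w : nat -> R => clamp M (w 0%nat) * clamp M (w 3%nat)).
  assert (Hq : Rabs (beta p * (cq y - cq z))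
               <= beta p * M * (Rabs (y 0%nat - z 0%nat) + Rabs (y 3%nat - z 3%nat))).
  { rewrite Rabs_mult, (Rabs_right (beta p)) by lra. rewrite Rmult_assoc.
    apply Rmult_le_compat_l; [lra|]. now apply clamp_mul_lipschitz. }
  assert (Hlin : forall a0 a1 a2 a3 a4 a5 s,
    clamped_field p M i y - clamped_field p M i z =
      a0 * (y 0%nat - z 0%nat) + a1 * (y 1%nat - z 1%nat) + a2 * (y 2%nat - z 2%nat)
      + a3 * (y 3%nat - z 3%nat) + a4 * (y 4%nat - z 4%nat) + a5 * (y 5%nat - z 5%nat)
      + s * (beta p * (cq y - cq z)) ->
    - rate_sum p <= a0 <= rate_sum p -> - rate_sum p <= a1 <= rate_sum p ->
    - rate_sum p <= a2 <= rate_sum p -> - rate_sum p <= a3 <= rate_sum p ->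
    - rate_sum p <= a4 <= rate_sum p -> - rate_sum p <= a5 <= rate_sum p -> -1 <= s <= 1 ->
    Rabs (clamped_field p M i y - clamped_field p M i z)
      <= (rate_sum p + beta p * M) * l1norm 6 (fun j => y j - z j)).
  { intros a0 a1 a2 a3 a4 a5 s -> ? ? ? ? ? ? ?.
    apply (Rabs_lincomb6_le _ _ _ _ _ _ _ _ _ _ (fun j => y j - z j));
      try (apply Rabs_le; assumption); [nra|exact Hq]. }
  destruct i as [|[|[|[|[|[|i]]]]]]; [| | | | | |lia].
  - apply (Hlin (- (pi_ p + mu p)) (theta p) 0 0 0 (eta p) (-1));
      [unfold cq; simpl; ring|unfold rate_sum; lra ..].
  - apply (Hlin (pi_ p) (- (theta p + mu p)) 0 0 0 0 0);
      [simpl; ring|unfold rate_sum; lra ..].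
  - apply (Hlin 0 0 (- (gamma p + mu p)) 0 0 0 1);
      [unfold cq; simpl; ring|unfold rate_sum; lra ..].
  - apply (Hlin 0 0 (gamma p) (- (delta p + tau p + mu p)) 0 0 0);
      [simpl; ring|unfold rate_sum; lra ..].
  - apply (Hlin 0 0 0 (delta p) (- (alpha p + omega p + mu p)) 0 0);
      [simpl; ring|unfold rate_sum; lra ..].
  - apply (Hlin 0 0 0 0 (alpha p) (- (eta p + mu p)) 0);
      [simpl; ring|unfold rate_sum; lra ..].
Qed.

Definition state_of_vec (Y : nat -> R -> R) (t : R) : state :=
  mkState (Y 0%nat t) (Y 1%nat t) (Y 2%nat t) (Y 3%nat t) (Y 4%nat t) (Y 5%nat t).

Definition vec_of_state (z : state) (j : nat) : R :=
  match j with
  | 0%nat => sS z | 1%nat => sV z | 2%nat => sE z | 3%nat => sI z | 4%nat => sT z | 5%nat => sR z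
  | _ => 0
  end.

Lemma clamped_field_agrees p z : params_pos p -> sqdist z (E0 p) < 1 ->
  let F i := clamped_field p (S0 p + 1) i (vec_of_state z) in
  F 0%nat = fS p z /\ F 1%nat = fV p z /\ F 2%nat = fE p z /\
  F 3%nat = fI p z /\ F 4%nat = fT p z /\ F 5%nat = fR p z.
Proof.
  intros Hp Hs F. pose proof (S0_pos p Hp).
  destruct (sq_le_sqdist z (E0 p)) as [C1 C2]. simpl in C2. rewrite Rminus_0_r in C2.
  pose proof (pow2_ge_0 (sE z - 0)).
  assert (A0 : Rabs (sS z - S0 p) < 1) by (apply Rabs_lt_of_sq_lt; [lra|unfold S0; lra]).
  assert (A3 : Rabs (sI z) < 1) by (apply Rabs_lt_of_sq_lt; lra).
  assert (B0 : Rabs (sS z) <= S0 p + 1).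
  { pose proof (Rabs_triang (sS z - S0 p) (S0 p)) as Ht.
    rewrite (Rabs_right (S0 p)) in Ht by lra. replace (sS z - S0 p + S0 p) with (sS z) in Ht by ring.
    lra. }
  assert (B3 : Rabs (sI z) <= S0 p + 1) by lra.
  unfold F, clamped_field, vec_of_state. rewrite (clamp_id _ _ B0), (clamp_id _ _ B3).
  unfold fS, fV, fE, fI, fT, fR. repeat split; ring.
Qed.

Lemma continuous_state_of_vec (Y : nat -> R -> R) t :
  (forall i, (i < 6)%nat -> continuity_pt (Y i) t) -> continuous_state_at (state_of_vec Y) t.
Proof. intros H. repeat split; apply H; lia. Qed.

Lemma is_solution_of_clamped p Y (b : Rbar) : params_pos p -> Rbar_lt 0 b ->
  (forall i t, (i < 6)%nat -> continuity_pt (Y i) t) ->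
  (forall i t, (i < 6)%nat -> 0 < t ->
     is_derive (Y i) t (clamped_field p (S0 p + 1) i (fun j => Y j t))) ->
  (forall t, 0 < t -> Rbar_lt t b -> sqdist (state_of_vec Y t) (E0 p) < 1) ->
  is_solution p b (state_of_vec Y).
Proof.
  intros Hp Hb Hc Hd Hs. split; [exact Hb|split].
  - intros t Ht Htb.
    destruct (clamped_field_agrees p (state_of_vec Y t) Hp (Hs t Ht Htb)) as (E0'&E1&E2&E3&E4&E5).
    simpl. rewrite <- E0', <- E1, <- E2, <- E3, <- E4, <- E5.
    assert (HD : forall i, (i < 6)%nat ->
              is_derive (Y i) t (clamped_field p (S0 p + 1) i (vec_of_state (state_of_vec Y t))))
      by (intros i Hi; now apply Hd).
    refine (conj (HD 0%nat _) (conj (HD 1%nat _) (conj (HD 2%nat _)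
             (conj (HD 3%nat _) (conj (HD 4%nat _) (HD 5%nat _)))))); lia.
  - simpl. repeat split; apply right_cont0P, right_cont0_of_continuity_pt, Hc; lia.
Qed.

Section Instability.

Variable p : params.
Hypotheses (Hp : params_pos p) (HRv : 1 < Rv p).

Definition cP := chetaev_P (kE p) (beta p * S0 p) (gamma p) (kI p).
Definition cQ := chetaev_Q (kE p) (beta p * S0 p) (gamma p) (kI p).
Definition cme := chetaev_me (kE p) (beta p * S0 p) (gamma p) (kI p).
Definition cmi := chetaev_mi (kE p) (beta p * S0 p) (gamma p) (kI p).
Definition cm := Rmin cme cmi / 2.
Definition cM := Rabs cP + 1 + Rabs cQ.

Definition chetaev (z : state) : R := quad_form cP cQ (sE z) (sI z).
Definition chetaev_rate (z : state) : R :=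
  2 * cP * sE z * fE p z + 2 * (fE p z * sI z + sE z * fI p z) + 2 * cQ * sI z * fI p z.

(* Radius on which the perturbation [beta (S - S0) I] of the (E, I) block is
   dominated; at most 1/2 so that the clamped field is exact on the doubled ball. *)
Definition eps0 := Rmin (1 / 2) (cm / (2 * beta p * (Rabs cP + 1))).

Lemma EI_block_unstable : kE p * kI p < beta p * S0 p * gamma p.
Proof.
  params_pos_facts Hp. pose proof HRv as HR. rewrite (Rv_eq p Hp) in HR.
  assert (Hk : 0 < kE p * kI p) by (unfold kE, kI; nra).
  apply (Rmult_lt_compat_r (kE p * kI p)) in HR; [|exact Hk].
  unfold Rdiv in HR. rewrite Rmult_assoc, Rinv_l, Rmult_1_r in HR by lra.
  lra.
Qed.

Lemma EI_block_pos : 0 < kE p /\ 0 < beta p * S0 p /\ 0 < gamma p /\ 0 < kI p.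
Proof.
  params_pos_facts Hp. pose proof (S0_pos p Hp). unfold kE, kI.
  repeat split; [lra|nra|lra|lra].
Qed.

Lemma cm_pos : 0 < cm.
Proof.
  destruct EI_block_pos as (Ha&Hbb&Hc&Hd).
  destruct (chetaev_coeffs_pos _ _ _ _ Ha Hbb Hc Hd EI_block_unstable).
  unfold cm, cme, cmi. apply Rdiv_lt_0_compat; [apply Rmin_pos; assumption|lra].
Qed.

Lemma cM_pos : 0 < cM.
Proof. unfold cM. pose proof (Rabs_pos cP). pose proof (Rabs_pos cQ). lra. Qed.

Lemma eps0_pos : 0 < eps0.
Proof.
  params_pos_facts Hp. pose proof cm_pos. pose proof (Rabs_pos cP).
  unfold eps0. apply Rmin_pos; [lra|]. apply Rdiv_lt_0_compat; nra.
Qed.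

Lemma chetaev_le z : chetaev z <= cM * (sE z ^ 2 + sI z ^ 2).
Proof.
  pose proof (Rabs_quad_form_le cP cQ (sE z) (sI z)).
  pose proof (Rle_abs (quad_form cP cQ (sE z) (sI z))). unfold chetaev, cM. lra.
Qed.

Lemma chetaev_rate_ge z : sqdist z (E0 p) < eps0^2 -> cm / cM * chetaev z <= chetaev_rate z.
Proof.
  intros Hz. destruct EI_block_pos as (Ha&Hbb&Hc&Hd). params_pos_facts Hp.
  pose proof cm_pos. pose proof cM_pos. pose proof eps0_pos. pose proof (Rabs_pos cP).
  destruct (sq_le_sqdist z (E0 p)) as [C1 _].
  assert (HX : Rabs (beta p * (sS z - S0 p)) <= cm / (2 * (Rabs cP + 1))).
  { assert (Hx : Rabs (sS z - S0 p) < eps0) by (apply Rabs_lt_of_sq_lt; [lra|unfold S0; lra]).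
    assert (He : eps0 <= cm / (2 * beta p * (Rabs cP + 1))) by apply Rmin_r.
    rewrite Rabs_mult, (Rabs_right (beta p)) by lra.
    replace (cm / (2 * (Rabs cP + 1))) with (beta p * (cm / (2 * beta p * (Rabs cP + 1))))
      by (field; lra).
    apply Rmult_le_compat_l; lra. }
  assert (Hrate : chetaev_rate z = cme * sE z ^ 2 + cmi * sI z ^ 2
                    + 2 * (cP * sE z + sI z) * (beta p * (sS z - S0 p) * sI z)).
  { unfold cme, cmi. rewrite <- chetaev_rate_identity by assumption.
    unfold chetaev_rate, cP, cQ. rewrite fE_E0_dev. unfold fI, kI. ring. }
  pose proof (quad_form_perturbation_le cP (beta p * (sS z - S0 p)) (sE z) (sI z) cm ltac:(lra) HX)
    as Hpert.
  pose proof (Rle_abs (- (2 * (cP * sE z + sI z) * (beta p * (sS z - S0 p) * sI z)))) as Hneg.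
  rewrite Rabs_Ropp in Hneg.
  assert (Hm : 2 * cm <= cme /\ 2 * cm <= cmi)
    by (unfold cm; pose proof (Rmin_l cme cmi); pose proof (Rmin_r cme cmi); lra).
  assert (HW : cm / cM * chetaev z <= cm * (sE z ^ 2 + sI z ^ 2)).
  { replace (cm * (sE z ^ 2 + sI z ^ 2)) with (cm / cM * (cM * (sE z ^ 2 + sI z ^ 2)))
      by (field; lra).
    apply Rmult_le_compat_l; [apply Rlt_le, Rdiv_lt_0_compat; lra|apply chetaev_le]. }
  pose proof (pow2_ge_0 (sE z)). pose proof (pow2_ge_0 (sI z)).
  rewrite Hrate. nra.
Qed.

Lemma is_derive_chetaev b x t : is_solution p b x -> 0 < t -> Rbar_lt t b ->
  is_derive (fun u => chetaev (x u)) t (chetaev_rate (x t)).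
Proof.
  intros [_ [Hd _]] Ht Htb. destruct (Hd t Ht Htb) as (_&_&D2&D3&_).
  exact (is_derive_quad_form _ _ _ _ cP cQ t D2 D3).
Qed.

Lemma right_cont0_chetaev b x : is_solution p b x -> right_cont0 (fun u => chetaev (x u)).
Proof.
  intros (_&_&_&_&HE&HI&_). apply right_cont0P in HE, HI. now apply continuity_pt_quad_form.
Qed.

(* Along a solution that stays in the [eps0]-ball, [chetaev] grows exponentially
   while remaining bounded, so it cannot start positive. *)
Lemma chetaev_nonpos_of_small_solution x : is_solution p p_infty x ->
  (forall t, 0 <= t -> sqdist (x t) (E0 p) < eps0^2) -> chetaev (x 0) <= 0.
Proof.
  intros Hs Hsmall. pose proof cm_pos. pose proof cM_pos. pose proof eps0_pos.
  assert (Heps : eps0 <= 1 / 2) by apply Rmin_l.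
  apply (nonpos_of_exp_growth_bounded (fun u => chetaev (x u)) (fun u => chetaev_rate (x u))
           (cm / cM) cM); [apply Rdiv_lt_0_compat; lra|apply (right_cont0_chetaev p_infty x Hs)| | |].
  - intros t Ht. exact (is_derive_chetaev p_infty x t Hs Ht I).
  - intros t Ht. apply chetaev_rate_ge, Hsmall. lra.
  - intros t Ht. eapply Rle_trans; [apply chetaev_le|].
    destruct (sq_le_sqdist (x t) (E0 p)) as [_ HEI]. simpl in HEI. rewrite !Rminus_0_r in HEI.
    pose proof (Hsmall t Ht). assert (sE (x t) ^ 2 + sI (x t) ^ 2 <= 1) by nra.
    rewrite <- (Rmult_1_r cM) at 2. apply Rmult_le_compat_l; lra.
Qed.

(* The clamped system is exact on the unit ball; its solution cannot leave the
   doubled [eps0]-ball, since up to the first exit it solves the model and so,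
   by stability, stays in the [eps0]-ball. *)
Lemma clamped_solution_stays_small del Y :
  (forall b x, is_solution p b x -> dist6 (x 0) (E0 p) < del ->
     forall t, 0 <= t -> Rbar_lt t b -> dist6 (x t) (E0 p) < eps0) ->
  (forall i t, (i < 6)%nat -> continuity_pt (Y i) t) ->
  (forall i t, (i < 6)%nat -> 0 < t ->
     is_derive (Y i) t (clamped_field p (S0 p + 1) i (fun j => Y j t))) ->
  dist6 (state_of_vec Y 0) (E0 p) < del -> sqdist (state_of_vec Y 0) (E0 p) < eps0^2 ->
  is_solution p p_infty (state_of_vec Y) /\
  forall t, 0 <= t -> sqdist (state_of_vec Y t) (E0 p) < eps0^2.
Proof.
  intros Hstab Hc Hd H0d H0. pose proof eps0_pos. assert (Heps : eps0 <= 1 / 2) by apply Rmin_l.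
  assert (H4 : (2 * eps0)^2 <= 1) by nra.
  set (g := fun u => sqdist (state_of_vec Y u) (E0 p)).
  assert (Hgc : forall t, continuity_pt g t)
    by (intros t; apply continuity_pt_wsqdist, continuous_state_of_vec; intros; now apply Hc).
  assert (Hbound : forall t, 0 <= t -> g t < (2 * eps0)^2).
  { intros t1 Ht1. destruct (Rlt_le_dec (g t1) ((2 * eps0)^2)) as [|Hge]; [assumption|exfalso].
    destruct (first_exit_time g ((2 * eps0)^2) t1 Ht1 ltac:(unfold g; nra) Hge
                (right_cont0_of_continuity_pt g (Hgc 0))) as [tau [Htau [Hgt Hbel]]];
      [intros; apply Hgc|].
    assert (Hsol : is_solution p tau (state_of_vec Y)).
    { apply is_solution_of_clamped; auto; [simpl; lra|].
      intros s Hs Hst. simpl in Hst. pose proof (Hbel s ltac:(lra)). unfold g in *. lra. }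
    assert (Hin : forall s, 0 <= s < tau -> g s < eps0^2).
    { intros s Hs. apply dist6_lt; [lra|]. apply (Hstab tau _ Hsol H0d s); simpl; lra. }
    pose proof (le_of_continuity_pt_left g tau (eps0^2) ltac:(lra) (Hgc tau) Hin). nra. }
  assert (Hsol : is_solution p p_infty (state_of_vec Y)).
  { apply is_solution_of_clamped; auto; [exact I|].
    intros s Hs _. pose proof (Hbound s ltac:(lra)). unfold g in *. lra. }
  split; [exact Hsol|]. intros t Ht. apply dist6_lt; [lra|].
  exact (Hstab p_infty _ Hsol H0d t Ht I).
Qed.

Lemma E0_unstable : unstable p (E0 p).
Proof.
  intros Hstab. pose proof eps0_pos as He.
  destruct (Hstab eps0 He) as [del [Hdel Hst]].
  destruct EI_block_pos as (Ha&Hbb&Hc&Hd).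
  destruct (quad_form_pos_somewhere cP cQ (chetaev_PQ_lt_1 _ _ _ _ Ha Hbb Hc Hd EI_block_unstable))
    as [e0 [i0 Hw]].
  set (r := Rmin del eps0). assert (Hr : 0 < r) by (apply Rmin_pos; lra).
  pose proof (Rabs_pos e0). pose proof (Rabs_pos i0).
  set (zeta := r / (2 * (Rabs e0 + Rabs i0 + 1))).
  assert (Hz : 0 < zeta) by (apply Rdiv_lt_0_compat; lra).
  set (z0 := mkState (S0 p) (V0 p) (zeta * e0) (zeta * i0) 0 0).
  assert (Hz0 : sqdist z0 (E0 p) < r^2).
  { assert (Hsum : zeta * Rabs e0 + zeta * Rabs i0 <= r / 2).
    { assert (zeta * (Rabs e0 + Rabs i0 + 1) = r / 2) by (unfold zeta; field; lra). nra. }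
    replace (sqdist z0 (E0 p)) with ((zeta * e0)^2 + (zeta * i0)^2)
      by (unfold sqdist, wsqdist, z0, S0, V0; simpl; ring).
    rewrite <- (pow2_abs (zeta * e0)), <- (pow2_abs (zeta * i0)), !Rabs_mult, (Rabs_right zeta) by lra.
    assert (0 <= zeta * Rabs e0) by nra. assert (0 <= zeta * Rabs i0) by nra. nra. }
  assert (HM : 0 <= S0 p + 1) by (pose proof (S0_pos p Hp); lra).
  assert (HK : 0 <= rate_sum p + beta p * (S0 p + 1))
    by (params_pos_facts Hp; unfold rate_sum; nra).
  destruct (lipschitz_field_global_solution 6 _ _ (vec_of_state z0) HK
              (clamped_field_lipschitz p _ Hp HM)) as [Y [HY0 [HYc HYd]]].
  assert (Hinit : state_of_vec Y 0 = z0) by (unfold state_of_vec; rewrite !HY0 by lia; reflexivity).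
  assert (Hd0 : dist6 (state_of_vec Y 0) (E0 p) < del).
  { rewrite Hinit. apply dist6_lt; [exact Hdel|].
    assert (r^2 <= del^2) by (apply pow_incr; split; [lra|apply Rmin_l]). lra. }
  assert (Hs0 : sqdist (state_of_vec Y 0) (E0 p) < eps0^2).
  { rewrite Hinit. assert (r^2 <= eps0^2) by (apply pow_incr; split; [lra|apply Rmin_r]). lra. }
  destruct (clamped_solution_stays_small del Y Hst HYc HYd Hd0 Hs0) as [Hsol Hsmall].
  pose proof (chetaev_nonpos_of_small_solution _ Hsol Hsmall) as Hnp.
  rewrite Hinit in Hnp. unfold chetaev, z0, quad_form in Hnp; simpl in Hnp. unfold quad_form in Hw.
  assert (0 < zeta^2 * (cP * e0^2 + 2 * e0 * i0 + cQ * i0^2))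
    by (apply Rmult_lt_0_compat; [apply pow_lt|]; lra).
  nra.
Qed.

End Instability.

Theorem theorem3 (p : params) (Hp : params_pos p) :
  (Rv p < 1 -> loc_asym_stable p (E0 p)) /\
  (Rv p > 1 -> unstable p (E0 p)).
Proof.
  split; intros HRv.
  - split; [apply E0_lyap_stable|apply E0_loc_attractive]; assumption.
  - now apply E0_unstable.
Qed.
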